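(* Let $\alpha>-1$ and $\beta>0$. Let $\Phi:[0,\infty)\to\mathbb{R}$ be twice differentiable with $\Phi,\Phi',\Phi''$ bounded and continuous on $[0,\infty)$. Then for every $x\in[0,\infty)$, $$\lim_{\eta\to\infty}\eta\left[\mathcal{R}_{\eta}^{(\alpha,\beta)}(\Phi;x)-\Phi(x)\right]=(1+\alpha)\Phi'(x)+\frac{x(3\beta+1)}{2\beta}\Phi''(x).$$
   Context: The generalized Laguerre polynomials are $\mathcal{L}_k^{(\alpha)}(t)=\sum_{i=0}^{k}\frac{(-1)^i}{i!}\binom{k+\alpha}{k-i}t^i$. Put $p_{\eta,k}(x)=e^{-\eta x/2}2^{-\alpha-1}2^{-k}\mathcal{L}_k^{(\alpha)}(-\eta x/2)$ and, for $k\ge1$, $z>0$, $\mathcal{I}_{k,\eta}^{\beta}(z)=\frac{\eta\beta e^{-\eta\beta z}(\eta\beta z)^{k\beta-1}}{\Gamma(k\beta)}$. The operator is $\mathcal{R}_{\eta}^{(\alpha,\beta)}(\Phi;x)=p_{\eta,0}(x)\Phi(0)+\sum_{k=1}^{\infty}p_{\eta,k}(x)\int_0^\infty\mathcal{I}_{k,\eta}^{\beta}(z)\Phi(z)\,dz$, $\eta>0$. *)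

From Stdlib Require Import Reals Factorial.
From Coquelicot Require Import Coquelicot.
Open Scope R_scope.

Fixpoint falling (a : R) (m : nat) : R :=
  match m with O => 1 | S m' => falling a m' * (a - INR m') end.
Definition gbinom (a : R) (m : nat) : R := falling a m / INR (fact m).

Definition laguerre (alpha : R) (k : nat) (t : R) : R :=
  sum_n (fun i => (-1) ^ i / INR (fact i) * gbinom (INR k + alpha) (k - i) * t ^ i) k.

Definition p_eta (alpha eta : R) (k : nat) (x : R) : R :=
  exp (- eta * x / 2) * Rpower 2 (- alpha - 1) * / 2 ^ k
  * laguerre alpha k (- eta * x / 2).

Definition Gamma (s : R) : R :=
  RInt_gen (fun t => Rpower t (s - 1) * exp (- t)) (at_right 0) (Rbar_locally p_infty).

Definition I_ker (beta eta : R) (k : nat) (z : R) : R :=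
  eta * beta * exp (- eta * beta * z) * Rpower (eta * beta * z) (INR k * beta - 1)
  / Gamma (INR k * beta).

Definition R_op (alpha beta eta : R) (Phi : R -> R) (x : R) : R :=
  p_eta alpha eta 0 x * Phi 0
  + Series (fun j => p_eta alpha eta (S j) x *
       RInt_gen (fun z => I_ker beta eta (S j) z * Phi z) (at_right 0) (Rbar_locally p_infty)).

Definition deriv_on_nonneg (f f' : R -> R) : Prop :=
  forall x, 0 <= x ->
    filterlim (fun h => (f (x + h) - f x) / h)
      (within (fun h => h <> 0 /\ 0 <= x + h) (locally 0)) (locally (f' x)).

Definition cont_on_nonneg (f : R -> R) : Prop :=
  forall x, 0 <= x -> filterlim f (within (fun y => 0 <= y) (locally x)) (locally (f x)).

Definition bounded_on_nonneg (f : R -> R) : Prop :=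
  exists M, forall x, 0 <= x -> Rabs (f x) <= M.

From Stdlib Require Import Reals Factorial Lra Lia Psatz ZArith Classical_Prop.
From Coquelicot Require Import Coquelicot.
Open Scope R_scope.

(* Expanding the Laguerre polynomial shows that [k |-> p_eta alpha eta k x] is the
   law of [I + M], with [I] Poisson of mean [eta x / 2] and [M | I = i] distributed
   as [binom(m + i + alpha, m) 2^(-m-i-alpha-1)]; the binomial series at [1/2] and
   index-shift recursions give its moments of order [<= 4] as explicit polynomials
   in [eta x].  The [k]-th integral of the operator is the expectation of [Phi] under
   the Gamma law of shape [k beta] and rate [eta beta], whose moments are rising
   factorials of [k beta] divided by powers of [eta beta].  Writing
   [Phi z = Phi x + Phi1 x (z - x) + Phi2 x (z - x)^2 / 2 + r z] with
   [|r z| <= eps (z - x)^2 + C_eps (z - x)^4], the polynomial part contributes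
   [(1 + alpha) Phi1 x + x (3 beta + 1) / (2 beta) Phi2 x + O(1/eta)] to
   [eta (R_eta Phi x - Phi x)], and the remainder [eps O(1) + C_eps O(1/eta)]. *)

Lemma is_series_ext_R (a b : nat -> R) (l : R) :
  (forall n, a n = b n) -> is_series a l -> is_series b l.
Proof. exact (is_series_ext a b l). Qed.

Lemma is_series_scal_R (c : R) (a : nat -> R) (l : R) :
  is_series a l -> is_series (fun n => c * a n) (c * l).
Proof. exact (is_series_scal c a l). Qed.

Lemma is_series_plus_R (a b : nat -> R) (la lb : R) :
  is_series a la -> is_series b lb -> is_series (fun n => a n + b n) (la + lb).
Proof. exact (is_series_plus a b la lb). Qed.

Lemma is_series_shift_zero (a : nat -> R) (l : R) :
  a O = 0 -> is_series (fun n => a (S n)) l -> is_series a l.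
Proof.
  intros H0 H. apply is_series_decr_1. rewrite H0.
  unfold plus, opp; simpl. now replace (l + - 0) with l by ring.
Qed.

Lemma is_series_sum_f_R0 (f : nat -> nat -> R) (L : nat -> R) (d : nat) :
  (forall i, (i <= d)%nat -> is_series (f i) (L i)) ->
  is_series (fun n => sum_f_R0 (fun i => f i n) d) (sum_f_R0 L d).
Proof.
  induction d as [|d IH]; intros HL; simpl.
  - apply HL; lia.
  - apply is_series_plus_R; [apply IH; intros; apply HL; lia | apply HL; lia].
Qed.

Lemma is_series_nonneg (a : nat -> R) (l : R) : is_series a l -> (forall n, 0 <= a n) -> 0 <= l.
Proof.
  intros H Hp. apply is_series_Reals in H.
  apply Rle_trans with (sum_f_R0 a 0); [simpl; auto | apply sum_incr; auto].
Qed.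

Lemma is_series_Rabs_le (a b : nat -> R) (la lb : R) :
  is_series a la -> is_series b lb -> (forall n, Rabs (a n) <= b n) -> Rabs la <= lb.
Proof.
  intros Ha Hb Hab. apply Rabs_le_between. split.
  - enough (0 <= lb + la) by lra.
    apply (is_series_nonneg _ _ (is_series_plus_R _ _ _ _ Hb Ha)).
    intros n; specialize (Hab n); apply Rabs_le_between in Hab; lra.
  - enough (0 <= lb + -1 * la) by lra.
    apply (is_series_nonneg _ _ (is_series_plus_R _ _ _ _ Hb (is_series_scal_R (-1) _ _ Ha))).
    intros n; specialize (Hab n); apply Rabs_le_between in Hab; lra.
Qed.

Lemma is_series_index_shift (w v : nat -> R) (k : R) (h : nat -> R) (L : R) :
  (forall n, INR (S n) * w (S n) = k * v n) ->
  is_series (fun n => v n * h (S n)) L ->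
  is_series (fun m => w m * (INR m * h m)) (k * L).
Proof.
  intros Hs H. apply is_series_shift_zero; [simpl; ring|].
  eapply is_series_ext_R; [|apply (is_series_scal_R k _ _ H)]. intros n.
  replace (w (S n) * (INR (S n) * h (S n))) with ((INR (S n) * w (S n)) * h (S n)) by ring.
  rewrite Hs. ring.
Qed.

Lemma is_series_pow_succ (w v : nat -> R) (k : R) (j : nat) (L : nat -> R) :
  (forall n, INR (S n) * w (S n) = k * v n) ->
  (forall i, (i <= j)%nat -> is_series (fun n => v n * INR n ^ i) (L i)) ->
  is_series (fun n => w n * INR n ^ S j)
    (k * sum_f_R0 (fun i => Binomial.C j i * L i) j).
Proof.
  intros Hs HL.
  apply (is_series_index_shift w v k (fun m => INR m ^ j)); [exact Hs|].
  eapply is_series_ext_R;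
    [|apply (is_series_sum_f_R0 (fun i n => Binomial.C j i * (v n * INR n ^ i)));
      intros i Hi; apply is_series_scal_R, HL, Hi].
  intros n. rewrite S_INR, binomial, scal_sum. apply sum_eq. intros i _.
  rewrite pow1. ring.
Qed.

Lemma is_series_quartic (w L : nat -> R) (c0 c1 c2 c3 c4 : R) :
  (forall j, (j <= 4)%nat -> is_series (fun n => w n * INR n ^ j) (L j)) ->
  is_series (fun n => w n * (c0 + c1 * INR n + c2 * INR n ^ 2 + c3 * INR n ^ 3 + c4 * INR n ^ 4))
    (c0 * L 0%nat + c1 * L 1%nat + c2 * L 2%nat + c3 * L 3%nat + c4 * L 4%nat).
Proof.
  intros HL.
  set (c := fun j : nat => match j with 0 => c0 | 1 => c1 | 2 => c2 | 3 => c3 | _ => c4 end).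
  assert (H := is_series_sum_f_R0 (fun j n => c j * (w n * INR n ^ j)) (fun j => c j * L j) 4
                 (fun j Hj => is_series_scal_R (c j) _ _ (HL j Hj))).
  simpl in H. eapply is_series_ext_R; [|exact H]. intros n; simpl; ring.
Qed.

Lemma sum_f_R0_antidiagonal (f : nat -> nat -> R) (N : nat) :
  sum_f_R0 (fun k => sum_f_R0 (fun i => f i (k - i)%nat) k) N =
  sum_f_R0 (fun i => sum_f_R0 (fun m => f i m) (N - i)) N.
Proof.
  induction N as [|N IH]; [reflexivity|].
  rewrite tech5, IH, tech5, Nat.sub_diag, tech5, Nat.sub_diag.
  change (sum_f_R0 (fun m => f (S N) m) 0) with (f (S N) 0%nat).
  assert (E : sum_f_R0 (fun i => sum_f_R0 (fun m => f i m) (S N - i)) N =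
              sum_f_R0 (fun i => sum_f_R0 (fun m => f i m) (N - i)) N +
              sum_f_R0 (fun i => f i (S N - i)%nat) N).
  { rewrite <- plus_sum. apply sum_eq. intros i Hi.
    replace (S N - i)%nat with (S (N - i)) by lia. apply tech5. }
  rewrite E. ring.
Qed.

Lemma sum_f_R0_le_nonneg (g : nat -> R) (I N : nat) :
  (forall i, 0 <= g i) -> (I <= N)%nat -> sum_f_R0 g I <= sum_f_R0 g N.
Proof. intros Hg HIN. induction HIN; [lra|]. rewrite tech5. specialize (Hg (S m)). lra. Qed.

Lemma infinite_sum_uniform (a : nat -> nat -> R) (A : nat -> R) (J : nat) (d : R) :
  0 < d -> (forall i, infinite_sum (a i) (A i)) ->
  exists N0, forall i n, (i <= J)%nat -> (N0 <= n)%nat -> A i - d < sum_f_R0 (a i) n.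
Proof.
  intros Hd HA. induction J as [|J [N1 HN1]].
  - destruct (HA 0%nat d Hd) as [N0 HN0]. exists N0. intros i n Hi Hn.
    replace i with 0%nat by lia. specialize (HN0 n Hn). unfold Rdist in HN0.
    apply Rabs_def2 in HN0. lra.
  - destruct (HA (S J) d Hd) as [N2 HN2]. exists (max N1 N2). intros i n Hi Hn.
    destruct (Nat.eq_dec i (S J)) as [->|Hne]; [|apply HN1; lia].
    specialize (HN2 n ltac:(lia)). unfold Rdist in HN2. apply Rabs_def2 in HN2. lra.
Qed.

Lemma is_series_antidiagonal (a : nat -> nat -> R) (A : nat -> R) (L : R) :
  (forall i m, 0 <= a i m) -> (forall i, is_series (a i) (A i)) -> is_series A L ->
  is_series (fun k => sum_n (fun i => a i (k - i)%nat) k) L.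
Proof.
  intros Hpos HA HL.
  apply is_series_Reals. apply is_series_Reals in HL.
  assert (HA' : forall i, infinite_sum (a i) (A i)) by (intros; apply is_series_Reals; auto).
  assert (HAle : forall i n, sum_f_R0 (a i) n <= A i)
    by (intros; apply sum_incr; [apply HA' | intros; apply Hpos]).
  assert (HApos : forall i, 0 <= A i)
    by (intros i; apply Rle_trans with (sum_f_R0 (a i) 0); [apply Hpos | apply HAle]).
  set (Sp := fun N => sum_f_R0 (fun k => sum_n (fun i => a i (k - i)%nat) k) N).
  assert (HS : forall N, Sp N = sum_f_R0 (fun i => sum_f_R0 (a i) (N - i)) N).
  { intros. unfold Sp. rewrite <- sum_f_R0_antidiagonal. apply sum_eq. intros. apply sum_n_Reals. }
  assert (Hup : forall N, Sp N <= L).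
  { intros. rewrite HS. apply Rle_trans with (sum_f_R0 A N); [|apply sum_incr; auto].
    apply sum_Rle. intros. apply HAle. }
  intros eps Heps.
  destruct (HL (eps / 2)) as [I HI]; [lra|].
  specialize (HI I (le_n _)). unfold Rdist in HI. apply Rabs_def2 in HI.
  set (d := eps / 2 / INR (S I)).
  assert (Hd : 0 < d) by (apply Rdiv_lt_0_compat; [lra | apply lt_0_INR; lia]).
  destruct (infinite_sum_uniform a A I d Hd HA') as [N0 HN].
  exists (I + N0)%nat. intros n Hn. unfold Rdist. fold (Sp n).
  assert (Hlow : sum_f_R0 A I - eps / 2 <= Sp n).
  { rewrite HS.
    apply Rle_trans with (sum_f_R0 (fun i => sum_f_R0 (a i) (n - i)) I).
    2:{ apply sum_f_R0_le_nonneg; [intros; apply cond_pos_sum; auto | lia]. }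
    apply Rle_trans with (sum_f_R0 (fun i => A i - d) I).
    { rewrite minus_sum, sum_cte. unfold d. right. field. apply Rgt_not_eq, lt_0_INR; lia. }
    apply sum_Rle. intros i Hi. left. apply HN; lia. }
  specialize (Hup n). apply Rabs_def1; lra.
Qed.

(** * Binomial series and the negative binomial weights *)

Lemma falling_pos (m : nat) (a : R) : (forall l, (l < m)%nat -> 0 < a - INR l) -> 0 < falling a m.
Proof.
  induction m as [|m IH]; intros H; simpl; [lra|].
  apply Rmult_lt_0_compat; [apply IH; intros l Hl|]; apply H; lia.
Qed.

Lemma falling_succ_shift (m : nat) (a : R) : falling (a + 1) (S m) = (a + 1) * falling a m.
Proof.
  induction m as [|m IH]; [simpl; ring|].
  change (falling (a + 1) (S (S m))) with (falling (a + 1) (S m) * (a + 1 - INR (S m))).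
  rewrite IH, S_INR. simpl. ring.
Qed.

Lemma gbinom_pos (b : R) (m : nat) : -1 < b -> 0 < gbinom (INR m + b) m.
Proof.
  intros Hb. apply Rdiv_lt_0_compat; [|apply lt_0_INR, lt_O_fact].
  apply falling_pos. intros l Hl. apply le_INR in Hl. rewrite S_INR in Hl. lra.
Qed.

Lemma gbinom_succ (b : R) (m : nat) :
  gbinom (INR (S m) + b) (S m) = gbinom (INR m + b) m * (INR m + 1 + b) / (INR m + 1).
Proof.
  unfold gbinom. replace (INR (S m) + b) with ((INR m + b) + 1) by (rewrite S_INR; ring).
  rewrite falling_succ_shift, fact_simpl, mult_INR, S_INR.
  assert (0 < INR (fact m)) by apply lt_0_INR, lt_O_fact.
  assert (0 <= INR m) by apply pos_INR.
  field. lra.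
Qed.

Section BinomialSeries.

Variable b : R.
Hypothesis Hb : -1 < b.
Let c (m : nat) : R := gbinom (INR m + b) m.

Lemma CV_radius_gbinom : CV_radius c = 1.
Proof.
  assert (Hc : forall n, c n <> 0) by (intros; apply Rgt_not_eq, gbinom_pos, Hb).
  assert (Hlim : is_lim_seq (fun n : nat => Rabs (c (S n) / c n)) 1).
  2:{ rewrite (CV_radius_finite_DAlembert c 1 Hc Rlt_0_1 Hlim). f_equal; field. }
  apply is_lim_seq_ext with (fun n => 1 + b * / (INR n + 1)).
  - intros n. unfold c. rewrite gbinom_succ.
    assert (0 < gbinom (INR n + b) n) by apply gbinom_pos, Hb.
    assert (0 <= INR n) by apply pos_INR.
    replace (gbinom (INR n + b) n * (INR n + 1 + b) / (INR n + 1) / gbinom (INR n + b) n)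
      with ((INR n + 1 + b) / (INR n + 1)) by (field; lra).
    rewrite Rabs_pos_eq by (apply Rdiv_le_0_compat; lra). field. lra.
  - replace (Finite 1) with (Finite (1 + b * 0)) by (f_equal; ring).
    apply (is_lim_seq_plus' _ _ 1 (b * 0)); [apply is_lim_seq_const|].
    apply (is_lim_seq_scal_l _ b 0).
    replace (Finite 0) with (Rbar_inv p_infty) by reflexivity.
    apply is_lim_seq_inv; [|discriminate].
    apply is_lim_seq_ext with (fun n => INR (S n)); [intros; rewrite S_INR; ring|].
    apply (is_lim_seq_incr_1 INR p_infty), is_lim_seq_INR.
Qed.

Lemma gbinom_inside (w : R) : -1 < w < 1 -> Rbar_lt (Rabs w) (CV_radius c).
Proof. intros Hw. rewrite CV_radius_gbinom. simpl. apply Rabs_def1; lra. Qed.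

(* [F(w) = sum c_m w^m] solves [(1 - w) F' = (1 + b) F], the equation of [(1 - w)^(-(1 + b))]. *)
Lemma PSeries_gbinom_ode (w : R) : -1 < w < 1 ->
  (1 - w) * PSeries (PS_derive c) w = (1 + b) * PSeries c w.
Proof.
  intros Hw.
  assert (HD := PSeries_correct _ _ (ex_pseries_derive c w (gbinom_inside w Hw))).
  assert (HF := PSeries_correct _ _ (CV_radius_inside c w (gbinom_inside w Hw))).
  set (D := PSeries (PS_derive c) w) in *. set (F := PSeries c w) in *.
  unfold is_pseries in HD, HF.
  assert (HD' : is_series (fun n => c n * (INR n + 1 + b) * w ^ n) D).
  { eapply is_series_ext_R; [|exact HD]. intros n. simpl. rewrite pow_n_pow.
    unfold PS_derive, c. rewrite gbinom_succ, S_INR.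
    unfold scal; simpl; unfold mult; simpl.
    assert (0 <= INR n) by apply pos_INR. field. lra. }
  assert (HF' : is_series (fun n => c n * w ^ n) F).
  { eapply is_series_ext_R; [|exact HF]. intros n.
    unfold scal; simpl; unfold mult; simpl. rewrite pow_n_pow. ring. }
  assert (HwD : is_series (fun n => INR n * c n * w ^ n) (w * D)).
  { apply is_series_shift_zero; [simpl; ring|].
    eapply is_series_ext_R; [|apply (is_series_scal_R w _ _ HD')]. intros n.
    unfold c. rewrite gbinom_succ, S_INR. simpl pow.
    assert (0 <= INR n) by apply pos_INR. field. lra. }
  assert (HD'' : is_series (fun n => c n * (INR n + 1 + b) * w ^ n) (w * D + (1 + b) * F)).
  { eapply is_series_ext_R; [|exact (is_series_plus_R _ _ _ _ HwD (is_series_scal_R (1 + b) _ _ HF'))].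
    intros n; simpl. ring. }
  apply is_series_unique in HD'. apply is_series_unique in HD''. lra.
Qed.

Lemma PSeries_gbinom (w : R) : -1 < w < 1 -> PSeries c w = Rpower (1 - w) (- (b + 1)).
Proof.
  intros Hw.
  set (g := fun w => PSeries c w * exp ((b + 1) * ln (1 - w))).
  assert (Hder : forall w, -1 < w < 1 -> is_derive g w 0).
  { intros v Hv. unfold g.
    assert (Hf := is_derive_PSeries c v (gbinom_inside v Hv)).
    assert (He : is_derive (fun w => exp ((b + 1) * ln (1 - w))) v
                   (exp ((b + 1) * ln (1 - v)) * ((b + 1) * (- / (1 - v))))).
    { auto_derive; [lra|]. replace (1 + - v) with (1 - v) by ring. field. lra. }
    eapply is_derive_ext; [intros; reflexivity|].
    replace 0 with (plus (mult (PSeries (PS_derive c) v) (exp ((b + 1) * ln (1 - v))))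
       (mult (PSeries c v) (exp ((b + 1) * ln (1 - v)) * ((b + 1) * - / (1 - v))))).
    { apply (is_derive_mult _ _ _ _ _ Hf He). intros; apply Rmult_comm. }
    unfold plus, mult; simpl.
    assert (E := PSeries_gbinom_ode v Hv).
    apply Rmult_eq_reg_l with (1 - v); [|lra].
    transitivity (exp ((b + 1) * ln (1 - v)) *
      ((1 - v) * PSeries (PS_derive c) v - (b + 1) * PSeries c v)); [field; lra|].
    rewrite E. ring. }
  assert (Hconst : g w = g 0).
  { destruct (MVT_gen g 0 w (fun _ => 0)) as [t [_ E]].
    - intros t Ht. apply Hder. split;
        [apply Rlt_le_trans with (Rmin 0 w) | apply Rle_lt_trans with (Rmax 0 w)];
        try lra; try apply Rmin_glb_lt; try apply Rmax_lub_lt; lra.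
    - intros t Ht. apply continuity_pt_filterlim, (ex_derive_continuous g t).
      exists 0. apply Hder. split;
        [apply Rlt_le_trans with (Rmin 0 w) | apply Rle_lt_trans with (Rmax 0 w)];
        try lra; try apply Rmin_glb_lt; try apply Rmax_lub_lt; lra.
    - lra. }
  unfold g in Hconst. rewrite PSeries_0, Rminus_0_r, ln_1, Rmult_0_r, exp_0 in Hconst.
  replace (c 0%nat) with 1 in Hconst by (unfold c, gbinom; simpl; field).
  unfold Rpower. replace (- (b + 1) * ln (1 - w)) with (- ((b + 1) * ln (1 - w))) by ring.
  rewrite exp_Ropp. assert (0 < exp ((b + 1) * ln (1 - w))) by apply exp_pos.
  apply Rmult_eq_reg_r with (exp ((b + 1) * ln (1 - w))); [|lra].
  rewrite Hconst. field. lra.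
Qed.

End BinomialSeries.

Definition negbin (b : R) (m : nat) : R := gbinom (INR m + b) m / 2 ^ m.

Lemma negbin_pos (b : R) (m : nat) : -1 < b -> 0 < negbin b m.
Proof. intros Hb. apply Rdiv_lt_0_compat; [now apply gbinom_pos | apply pow_lt; lra]. Qed.

Lemma negbin_shift (b : R) (n : nat) : INR (S n) * negbin b (S n) = (b + 1) / 2 * negbin (b + 1) n.
Proof.
  unfold negbin, gbinom.
  replace (INR (S n) + b) with (INR n + b + 1) by (rewrite S_INR; ring).
  replace (INR n + (b + 1)) with (INR n + b + 1) by ring.
  simpl falling. replace (INR n + b + 1 - INR n) with (b + 1) by ring.
  rewrite fact_simpl, mult_INR. simpl pow.
  assert (0 < INR (fact n)) by apply lt_0_INR, lt_O_fact.
  assert (0 < INR (S n)) by (apply lt_0_INR; lia).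
  assert (0 < 2 ^ n) by (apply pow_lt; lra).
  field. lra.
Qed.

Lemma is_series_negbin (b : R) : -1 < b -> is_series (negbin b) (Rpower 2 (b + 1)).
Proof.
  intros Hb.
  replace (Rpower 2 (b + 1)) with (PSeries (fun m => gbinom (INR m + b) m) (/ 2)).
  2:{ rewrite PSeries_gbinom by lra. replace (1 - / 2) with (/ 2) by field.
      unfold Rpower. rewrite ln_Rinv by lra. f_equal. ring. }
  assert (Hr : Rbar_lt (Rabs (/ 2)) (CV_radius (fun m => gbinom (INR m + b) m)))
    by (apply gbinom_inside; lra).
  eapply is_series_ext_R; [|exact (PSeries_correct _ _ (CV_radius_inside _ _ Hr))].
  intros n. unfold scal; simpl; unfold mult; simpl.
  rewrite pow_n_pow. unfold negbin. rewrite pow_inv. field. apply pow_nonzero; lra.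
Qed.

(* Closed forms are given for [j <= 4] only; the last branch is a placeholder. *)
Definition negbin_moment (b : R) (j : nat) : R :=
  match j with
  | 0 => 1
  | 1 => b + 1
  | 2 => b ^ 2 + 4 * b + 3
  | 3 => b ^ 3 + 9 * b ^ 2 + 21 * b + 13
  | 4 => b ^ 4 + 16 * b ^ 3 + 78 * b ^ 2 + 138 * b + 75
  | _ => 0
  end.

Lemma is_series_negbin_moment (j : nat) (b : R) : (j <= 4)%nat -> -1 < b ->
  is_series (fun m => negbin b m * INR m ^ j) (Rpower 2 (b + 1) * negbin_moment b j).
Proof.
  intros Hj. revert b. enough (H : forall b, -1 < b -> forall i, (i <= j)%nat ->
    is_series (fun m => negbin b m * INR m ^ i) (Rpower 2 (b + 1) * negbin_moment b i))
    by (intros b Hb; apply H; auto).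
  induction j as [|j IH]; intros b Hb i Hi.
  - replace i with 0%nat by lia. simpl. rewrite Rmult_1_r.
    eapply is_series_ext_R; [|now apply is_series_negbin]. intros; simpl; ring.
  - destruct (Nat.eq_dec i (S j)) as [->|Hne]; [|apply IH; auto; lia].
    replace (Rpower 2 (b + 1) * negbin_moment b (S j)) with ((b + 1) / 2 *
      sum_f_R0 (fun i => Binomial.C j i * (Rpower 2 (b + 1 + 1) * negbin_moment (b + 1) i)) j).
    + apply (is_series_pow_succ _ _ _ _ _ (negbin_shift b)).
      intros i Hi'. apply IH; [lia | lra | lia].
    + rewrite Rpower_plus, Rpower_1 by lra.
      destruct j as [|[|[|[|j]]]]; try lia; unfold Binomial.C; simpl; field.
Qed.

Definition poisson (u : R) (i : nat) : R := exp (- u) * u ^ i / INR (fact i).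

Lemma poisson_nonneg (u : R) (i : nat) : 0 <= u -> 0 <= poisson u i.
Proof.
  intros Hu. apply Rdiv_le_0_compat; [|apply lt_0_INR, lt_O_fact].
  apply Rmult_le_pos; [left; apply exp_pos | apply pow_le; auto].
Qed.

Lemma poisson_shift (u : R) (n : nat) : INR (S n) * poisson u (S n) = u * poisson u n.
Proof.
  unfold poisson. rewrite fact_simpl, mult_INR. simpl pow.
  assert (0 < INR (fact n)) by apply lt_0_INR, lt_O_fact.
  assert (0 < INR (S n)) by (apply lt_0_INR; lia).
  field. lra.
Qed.

Lemma is_series_poisson (u : R) : is_series (poisson u) 1.
Proof.
  replace 1 with (exp (- u) * exp u) by (rewrite <- exp_plus; replace (- u + u) with 0 by ring; apply exp_0).
  eapply is_series_ext_R; [|apply (is_series_scal_R (exp (- u)) _ _ (is_exp_Reals u))].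
  intros n. unfold scal; simpl; unfold mult; simpl. rewrite pow_n_pow. unfold poisson. field.
  apply INR_fact_neq_0.
Qed.

Definition poisson_moment (u : R) (j : nat) : R :=
  match j with
  | 0 => 1
  | 1 => u
  | 2 => u + u ^ 2
  | 3 => u + 3 * u ^ 2 + u ^ 3
  | 4 => u + 7 * u ^ 2 + 6 * u ^ 3 + u ^ 4
  | _ => 0
  end.

Lemma is_series_poisson_moment (j : nat) (u : R) : (j <= 4)%nat ->
  is_series (fun i => poisson u i * INR i ^ j) (poisson_moment u j).
Proof.
  intros Hj. enough (H : forall i, (i <= j)%nat ->
    is_series (fun n => poisson u n * INR n ^ i) (poisson_moment u i)) by auto.
  induction j as [|j IH]; intros i Hi.
  - replace i with 0%nat by lia.
    simpl. eapply is_series_ext_R; [|apply (is_series_poisson u)]. intros; simpl; ring.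
  - destruct (Nat.eq_dec i (S j)) as [->|Hne]; [|apply IH; lia].
    replace (poisson_moment u (S j))
      with (u * sum_f_R0 (fun i => Binomial.C j i * poisson_moment u i) j).
    + apply (is_series_pow_succ _ _ _ _ _ (poisson_shift u)). intros i Hi'. apply IH; lia.
    + destruct j as [|[|[|[|j]]]]; try lia; unfold Binomial.C; simpl; field.
Qed.

Lemma is_series_poisson_quartic (u : R) (f : nat -> R) (e0 e1 e2 e3 e4 V : R) :
  (forall i, f i = e0 + e1 * INR i + e2 * INR i ^ 2 + e3 * INR i ^ 3 + e4 * INR i ^ 4) ->
  e0 * poisson_moment u 0 + e1 * poisson_moment u 1 + e2 * poisson_moment u 2
    + e3 * poisson_moment u 3 + e4 * poisson_moment u 4 = V ->
  is_series (fun i => poisson u i * f i) V.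
Proof.
  intros Hf <-.
  eapply is_series_ext_R; [|apply is_series_quartic; intros j Hj; now apply is_series_poisson_moment].
  intros i. now rewrite Hf.
Qed.

(** * The Laguerre weights as a mixture *)

Definition p_eta_moment (alpha u : R) (j : nat) : R :=
  match j with
  | 0 => 1
  | 1 => 1 + alpha + 2 * u
  | 2 => 3 + 4 * alpha + alpha ^ 2 + 10 * u + 4 * u * alpha + 4 * u ^ 2
  | 3 => 13 + 21 * alpha + 9 * alpha ^ 2 + alpha ^ 3 + 62 * u + 42 * u * alpha
         + 6 * u * alpha ^ 2 + 48 * u ^ 2 + 12 * u ^ 2 * alpha + 8 * u ^ 3
  | 4 => 75 + 138 * alpha + 78 * alpha ^ 2 + 16 * alpha ^ 3 + alpha ^ 4 + 466 * u
         + 416 * u * alpha + 108 * u * alpha ^ 2 + 8 * u * alpha ^ 3 + 532 * u ^ 2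
         + 240 * u ^ 2 * alpha + 24 * u ^ 2 * alpha ^ 2 + 176 * u ^ 3 + 32 * u ^ 3 * alpha
         + 16 * u ^ 4
  | _ => 0
  end.

Section LaguerreMixture.

Variables alpha eta x : R.
Hypothesis Halpha : -1 < alpha.
Hypothesis Hetax : 0 <= eta * x.

Definition laguerre_term (i m : nat) : R :=
  poisson (eta * x / 2) i * (Rpower 2 (- alpha - 1) / 2 ^ i) * negbin (INR i + alpha) m.

Lemma laguerre_term_nonneg (i m : nat) : 0 <= laguerre_term i m.
Proof.
  apply Rmult_le_pos; [apply Rmult_le_pos|].
  - apply poisson_nonneg. lra.
  - apply Rdiv_le_0_compat; [left; apply exp_pos | apply pow_lt; lra].
  - left; apply negbin_pos. assert (0 <= INR i) by apply pos_INR. lra.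
Qed.

Lemma p_eta_antidiagonal (k : nat) :
  p_eta alpha eta k x = sum_n (fun i => laguerre_term i (k - i)) k.
Proof.
  unfold p_eta, laguerre. rewrite !sum_n_Reals, scal_sum.
  apply sum_eq. intros i Hi.
  unfold laguerre_term, poisson, negbin.
  replace (INR (k - i) + (INR i + alpha)) with (INR k + alpha) by (rewrite minus_INR by lia; ring).
  replace (2 ^ k) with (2 ^ i * 2 ^ (k - i)) by (rewrite <- pow_add; f_equal; lia).
  assert (Hsign : (-1) ^ i * (- (eta * x / 2)) ^ i = (eta * x / 2) ^ i)
    by (rewrite <- Rpow_mult_distr; f_equal; ring).
  replace (- eta * x / 2) with (- (eta * x / 2)) by field.
  rewrite <- Hsign. field.
  repeat split; try apply INR_fact_neq_0; apply pow_nonzero; lra.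
Qed.

Lemma is_series_laguerre_row (i j : nat) : (j <= 4)%nat ->
  is_series (fun m => laguerre_term i m * (INR i + INR m) ^ j)
    (poisson (eta * x / 2) i *
     sum_f_R0 (fun l => Binomial.C j l * negbin_moment (INR i + alpha) l * INR i ^ (j - l)) j).
Proof.
  intros Hj. set (b := INR i + alpha).
  assert (Hb : -1 < b) by (assert (0 <= INR i) by apply pos_INR; unfold b; lra).
  set (c := poisson (eta * x / 2) i * (Rpower 2 (- alpha - 1) / 2 ^ i)).
  assert (Hc : c * Rpower 2 (b + 1) = poisson (eta * x / 2) i).
  { unfold c, b. replace (INR i + alpha + 1) with (INR i + - (- alpha - 1)) by ring.
    rewrite Rpower_plus, Rpower_Ropp, Rpower_pow by lra.
    assert (0 < Rpower 2 (- alpha - 1)) by apply exp_pos.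
    assert (0 < 2 ^ i) by (apply pow_lt; lra). field. lra. }
  replace (poisson (eta * x / 2) i * _)
    with (c * sum_f_R0 (fun l => Binomial.C j l * INR i ^ (j - l) *
                                 (Rpower 2 (b + 1) * negbin_moment b l)) j).
  - apply is_series_ext_R with
      (fun m => c * sum_f_R0 (fun l => Binomial.C j l * INR i ^ (j - l) * (negbin b m * INR m ^ l)) j).
    + intros m. rewrite (Rplus_comm (INR i)), binomial, !scal_sum. apply sum_eq. intros l _.
      unfold laguerre_term, c. fold b. ring.
    + apply is_series_scal_R, (is_series_sum_f_R0 (fun l m => _ * (negbin b m * INR m ^ l))).
      intros l Hl. apply is_series_scal_R, is_series_negbin_moment; [lia | exact Hb].
  - rewrite <- Hc, !scal_sum. apply sum_eq. intros l _. ring.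
Qed.

Lemma is_series_p_eta_moment (j : nat) : (j <= 4)%nat ->
  is_series (fun k => p_eta alpha eta k x * INR k ^ j) (p_eta_moment alpha (eta * x / 2) j).
Proof.
  intros Hj.
  assert (Hpos : forall i m, 0 <= laguerre_term i m * (INR i + INR m) ^ j).
  { intros i m. apply Rmult_le_pos; [apply laguerre_term_nonneg|].
    apply pow_le, Rplus_le_le_0_compat; apply pos_INR. }
  eapply is_series_ext_R; [|apply (is_series_antidiagonal _ _ _ Hpos
      (fun i => is_series_laguerre_row i j Hj))].
  - intros k. simpl. rewrite p_eta_antidiagonal, !sum_n_Reals, (Rmult_comm _ (INR k ^ j)), scal_sum. apply sum_eq. intros i Hi.
    rewrite minus_INR by lia. replace (INR i + (INR k - INR i)) with (INR k) by ring. reflexivity.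
  - destruct j as [|[|[|[|[|j]]]]]; try lia.
    + apply (is_series_poisson_quartic _ _ 1 0 0 0 0); [intros; unfold Binomial.C; simpl; field | simpl; ring].
    + apply (is_series_poisson_quartic _ _ (1 + alpha) 2 0 0 0);
        [intros; unfold Binomial.C; simpl; field | simpl; ring].
    + apply (is_series_poisson_quartic _ _ (3 + 4 * alpha + alpha ^ 2) (6 + 4 * alpha) 4 0 0);
        [intros; unfold Binomial.C; simpl; field | simpl; ring].
    + apply (is_series_poisson_quartic _ _ (13 + 21 * alpha + 9 * alpha ^ 2 + alpha ^ 3)
          (30 + 30 * alpha + 6 * alpha ^ 2) (24 + 12 * alpha) 8 0);
        [intros; unfold Binomial.C; simpl; field | simpl; ring].
    + apply (is_series_poisson_quartic _ _ (75 + 138 * alpha + 78 * alpha ^ 2 + 16 * alpha ^ 3 + alpha ^ 4)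
          (190 + 240 * alpha + 84 * alpha ^ 2 + 8 * alpha ^ 3) (180 + 144 * alpha + 24 * alpha ^ 2)
          (80 + 32 * alpha) 16);
        [intros; unfold Binomial.C; simpl; field | simpl; ring].
Qed.

Lemma is_series_p_eta_quartic (f : nat -> R) (d0 d1 d2 d3 d4 V : R) :
  (forall k, f k = d0 + d1 * INR k + d2 * INR k ^ 2 + d3 * INR k ^ 3 + d4 * INR k ^ 4) ->
  d0 * p_eta_moment alpha (eta * x / 2) 0 + d1 * p_eta_moment alpha (eta * x / 2) 1
    + d2 * p_eta_moment alpha (eta * x / 2) 2 + d3 * p_eta_moment alpha (eta * x / 2) 3
    + d4 * p_eta_moment alpha (eta * x / 2) 4 = V ->
  is_series (fun k => p_eta alpha eta k x * f k) V.
Proof.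
  intros Hf <-.
  eapply is_series_ext_R; [|apply is_series_quartic; intros j Hj; now apply is_series_p_eta_moment].
  intros k. now rewrite Hf.
Qed.

Lemma p_eta_nonneg (k : nat) : 0 <= p_eta alpha eta k x.
Proof.
  rewrite p_eta_antidiagonal, sum_n_Reals. apply cond_pos_sum. intros; apply laguerre_term_nonneg.
Qed.

End LaguerreMixture.

Local Notation F0 := (at_right 0).
Local Notation Finf := (Rbar_locally p_infty).

Lemma ball_R_abs (x e y : R) : ball x e y <-> Rabs (y - x) < e.
Proof. unfold ball; simpl. unfold AbsRing_ball, abs, minus, plus, opp; simpl. tauto. Qed.

Lemma ex_derive_continuous_R (f : R -> R) (x : R) : ex_derive f x -> continuous f x.
Proof. apply (ex_derive_continuous (K := R_AbsRing) (V := R_NormedModule)). Qed.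

Lemma ex_RInt_continuous_R (f : R -> R) (a b : R) :
  (forall z, Rmin a b <= z <= Rmax a b -> continuous f z) -> ex_RInt f a b.
Proof. apply (ex_RInt_continuous (V := R_CompleteNormedModule)). Qed.

Lemma filter_prod_pos (P : R -> Prop) :
  (forall x, 0 < x -> P x) ->
  filter_prod F0 Finf (fun ab => forall x, Rmin (fst ab) (snd ab) <= x <= Rmax (fst ab) (snd ab) -> P x).
Proof.
  intros HP. apply Filter_prod with (fun a => 0 < a) (fun b => 0 < b).
  - exists (mkposreal 1 Rlt_0_1). intros; auto.
  - exists 0. auto.
  - intros a b Ha Hb x Hx. apply HP. simpl in Hx.
    assert (0 < Rmin a b) by (apply Rmin_glb_lt; auto). lra.
Qed.

Lemma is_RInt_gen_ext_pos (f g : R -> R) (L : R) : (forall z, 0 < z -> f z = g z) ->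
  is_RInt_gen f F0 Finf L -> is_RInt_gen g F0 Finf L.
Proof.
  intros Hfg. apply is_RInt_gen_ext.
  eapply filter_imp; [|exact (filter_prod_pos _ Hfg)].
  intros ab H x Hx. apply H. lra.
Qed.

Lemma is_RInt_gen_plus_R (f g : R -> R) (lf lg : R) :
  is_RInt_gen f F0 Finf lf -> is_RInt_gen g F0 Finf lg ->
  is_RInt_gen (fun z => f z + g z) F0 Finf (lf + lg).
Proof. intros Hf Hg. apply (is_RInt_gen_plus _ _ _ _ Hf Hg). Qed.

Lemma is_RInt_gen_scal_R (f : R -> R) (lf k : R) :
  is_RInt_gen f F0 Finf lf -> is_RInt_gen (fun z => k * f z) F0 Finf (k * lf).
Proof. intros H. apply (is_RInt_gen_scal _ k _ H). Qed.

Lemma is_RInt_gen_minus_R (f g : R -> R) (lf lg : R) :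
  is_RInt_gen f F0 Finf lf -> is_RInt_gen g F0 Finf lg ->
  is_RInt_gen (fun z => f z - g z) F0 Finf (lf - lg).
Proof. intros Hf Hg. apply (is_RInt_gen_minus _ _ _ _ Hf Hg). Qed.

Lemma is_RInt_gen_Rabs_le (f g : R -> R) (lf lg : R) :
  is_RInt_gen f F0 Finf lf -> is_RInt_gen g F0 Finf lg ->
  (forall z, 0 < z -> Rabs (f z) <= g z) -> Rabs lf <= lg.
Proof.
  intros Hf Hg Hfg.
  apply (RInt_gen_norm (Fa := F0) (Fb := Finf) f g lf lg); auto.
  - apply Filter_prod with (fun a => 0 < a < 1) (fun b => 1 < b).
    + exists (mkposreal 1 Rlt_0_1). intros y Hy Hy0. apply (proj1 (ball_R_abs _ _ _)) in Hy.
      simpl in Hy. rewrite Rminus_0_r in Hy. apply Rabs_def2 in Hy. lra.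
    + exists 1. auto.
    + intros; simpl; lra.
  - apply Filter_prod with (fun a => 0 < a) (fun b => True).
    + exists (mkposreal 1 Rlt_0_1). intros; auto.
    + exists 0. auto.
    + intros a b Ha _ x Hx. simpl in Hx. apply Hfg. lra.
Qed.

Lemma is_RInt_gen_scale_var (g : R -> R) (L c : R) : 0 < c ->
  is_RInt_gen g F0 Finf L -> is_RInt_gen (fun z => c * g (c * z)) F0 Finf L.
Proof.
  intros Hc H P HP.
  destruct (H P HP) as [Q R HQ HR HQR].
  apply Filter_prod with (fun a => Q (c * a)) (fun b => R (c * b)).
  - destruct HQ as [eps He].
    exists (mkposreal (eps / c) ltac:(apply Rdiv_lt_0_compat; [destruct eps|]; auto)).
    intros y Hy Hy0. apply He; [|nra].
    apply (proj1 (ball_R_abs _ _ _)) in Hy. simpl in Hy. apply ball_R_abs. rewrite Rminus_0_r in *.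
    rewrite Rabs_mult, (Rabs_pos_eq c) by lra.
    apply Rmult_lt_reg_r with (/ c); [apply Rinv_0_lt_compat; auto|].
    replace (c * Rabs y * / c) with (Rabs y) by (field; lra). auto.
  - destruct HR as [M HM]. exists (M / c). intros x Hx. apply HM.
    apply Rmult_lt_reg_r with (/ c); [apply Rinv_0_lt_compat; auto|].
    replace (c * x * / c) with x by (field; lra). auto.
  - intros a b Ha Hb. destruct (HQR _ _ Ha Hb) as [y [Hy Py]]. exists y. split; auto.
    simpl in Hy |- *.
    assert (Hy' : is_RInt g (c * a + 0) (c * b + 0) y) by (rewrite !Rplus_0_r; auto).
    apply is_RInt_comp_lin in Hy'.
    eapply is_RInt_ext; [|exact Hy']. intros x _. simpl. rewrite Rplus_0_r. reflexivity.
Qed.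

Section NonnegImproper.

Variable f : R -> R.
Hypothesis f_nonneg : forall t, 0 < t -> 0 <= f t.
Hypothesis ex_RInt_f : forall a b, 0 < a -> a <= b -> ex_RInt f a b.

Lemma RInt_nonneg_le_wider (a b a' b' : R) :
  0 < a' -> a' <= a -> a <= b -> b <= b' -> RInt f a b <= RInt f a' b'.
Proof.
  intros Ha' H1 H2 H3.
  rewrite <- (RInt_Chasles f a' a b') by (apply ex_RInt_f; lra).
  rewrite <- (RInt_Chasles f a b b') by (apply ex_RInt_f; lra).
  unfold plus; simpl.
  assert (0 <= RInt f a' a)
    by (apply RInt_ge_0; [lra | apply ex_RInt_f; lra | intros; apply f_nonneg; lra]).
  assert (0 <= RInt f b b')
    by (apply RInt_ge_0; [lra | apply ex_RInt_f; lra | intros; apply f_nonneg; lra]).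
  lra.
Qed.

(* The improper integral of a nonnegative function is the supremum of its
   integrals over compact subintervals. *)
Lemma is_RInt_gen_nonneg_bounded (C : R) :
  (forall a b, 0 < a -> a <= b -> RInt f a b <= C) ->
  exists L, is_RInt_gen f F0 Finf L /\ (forall a b, 0 < a -> a <= b -> RInt f a b <= L).
Proof.
  intros HC.
  set (E := fun y => exists a b, 0 < a /\ a <= b /\ y = RInt f a b).
  destruct (completeness E) as [L [HLub HLleast]].
  - exists C. intros y [a [b [Ha [Hab ->]]]]. auto.
  - exists (RInt f 1 1). exists 1, 1. repeat split; lra.
  - exists L. split; [|intros a b Ha Hab; apply HLub; exists a, b; auto].
    intros P [eps HP].
    assert (Hex0 : exists a0 b0, 0 < a0 /\ a0 <= b0 /\ L - eps < RInt f a0 b0).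
    { apply NNPP. intros Hn.
      assert (L <= L - eps).
      { apply HLleast. intros y [a [b [Ha [Hab ->]]]].
        apply Rnot_lt_le. intros Hlt. apply Hn. exists a, b. auto. }
      destruct eps; simpl in *; lra. }
    destruct Hex0 as [a0 [b0 [Ha0 [Hab0 Hlt]]]].
    apply Filter_prod with (fun a => 0 < a < a0) (fun b => b0 < b).
    + exists (mkposreal a0 Ha0). intros y Hy Hy0. apply (proj1 (ball_R_abs _ _ _)) in Hy.
      simpl in Hy. rewrite Rminus_0_r in Hy. apply Rabs_def2 in Hy. lra.
    + exists b0. auto.
    + intros a b Ha Hb. simpl. exists (RInt f a b). split.
      * exact (RInt_correct f a b (ex_RInt_f a b ltac:(lra) ltac:(lra))).
      * apply HP, ball_R_abs.
        assert (RInt f a b <= L) by (apply HLub; exists a, b; repeat split; lra).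
        assert (RInt f a0 b0 <= RInt f a b) by (apply RInt_nonneg_le_wider; lra).
        apply Rabs_def1; lra.
Qed.

Lemma RInt_le_is_RInt_gen_nonneg (L : R) : is_RInt_gen f F0 Finf L ->
  forall a b, 0 < a -> a <= b -> RInt f a b <= L.
Proof.
  intros HL a b Ha Hab.
  apply Rnot_lt_le. intros Hlt.
  set (eps := RInt f a b - L).
  assert (Heps : 0 < eps) by (unfold eps; lra).
  destruct (HL (ball L (mkposreal eps Heps))) as [Q R [d Hd] [M HM] HQR];
    [exists (mkposreal eps Heps); auto|].
  set (a' := Rmin a (d / 2)).
  assert (Ha' : 0 < a' <= a)
    by (unfold a'; split; [apply Rmin_glb_lt; destruct d; simpl; lra | apply Rmin_l]).
  assert (HQa : Q a').
  { apply Hd; [|lra]. apply ball_R_abs. rewrite Rminus_0_r, Rabs_pos_eq by lra.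
    apply Rle_lt_trans with (d / 2); [apply Rmin_r | destruct d; simpl; lra]. }
  set (b' := Rmax b M + 1).
  assert (Hbb' : b <= b' /\ M < b')
    by (unfold b'; assert (b <= Rmax b M) by apply Rmax_l; assert (M <= Rmax b M) by apply Rmax_r; lra).
  destruct (HQR a' b' HQa (HM b' (proj2 Hbb'))) as [y [Hy Hb]]. simpl in Hy.
  apply (proj1 (ball_R_abs _ _ _)) in Hb. simpl in Hb. apply Rabs_def2 in Hb.
  assert (y = RInt f a' b') by (symmetry; apply is_RInt_unique; auto).
  assert (RInt f a b <= RInt f a' b') by (apply RInt_nonneg_le_wider; lra).
  unfold eps in Hb. lra.
Qed.

End NonnegImproper.

Lemma ex_RInt_gen_dominated (f g : R -> R) (Lg : R) :
  (forall a b, 0 < a -> a <= b -> ex_RInt f a b) ->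
  (forall a b, 0 < a -> a <= b -> ex_RInt g a b) ->
  (forall t, 0 < t -> Rabs (f t) <= g t) ->
  is_RInt_gen g F0 Finf Lg -> ex_RInt_gen f F0 Finf.
Proof.
  intros Hf Hg Hfg HL.
  assert (Hgpos : forall t, 0 < t -> 0 <= g t)
    by (intros t Ht; specialize (Hfg t Ht); assert (0 <= Rabs (f t)) by apply Rabs_pos; lra).
  destruct (is_RInt_gen_nonneg_bounded (fun t => f t + g t)) with (C := 2 * Lg) as [Lh [Hh _]].
  - intros t Ht. specialize (Hfg t Ht). apply Rabs_le_between in Hfg. lra.
  - intros. apply (ex_RInt_plus f g); auto.
  - intros a b Ha Hab.
    replace (RInt (fun t => f t + g t) a b) with (RInt f a b + RInt g a b)
      by (symmetry; exact (RInt_plus f g a b (Hf a b Ha Hab) (Hg a b Ha Hab))).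
    assert (RInt f a b <= RInt g a b).
    { apply RInt_le; auto. intros t Ht. specialize (Hfg t ltac:(lra)).
      apply Rabs_le_between in Hfg. lra. }
    assert (RInt g a b <= Lg) by (apply (RInt_le_is_RInt_gen_nonneg g); auto).
    lra.
  - exists (Lh - Lg).
    eapply is_RInt_gen_ext_pos; [|exact (is_RInt_gen_minus_R _ _ _ _ Hh HL)].
    intros; simpl; ring.
Qed.

(** * The Gamma function and the Gamma kernel *)

Lemma exp_le (x y : R) : x <= y -> exp x <= exp y.
Proof. intros [H | ->]; [left; apply exp_increasing, H | lra]. Qed.

Definition gamma_integrand (s t : R) : R := Rpower t (s - 1) * exp (- t).

Lemma gamma_integrand_nonneg (s t : R) : 0 <= gamma_integrand s t.
Proof. unfold gamma_integrand, Rpower. apply Rmult_le_pos; left; apply exp_pos. Qed.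

Lemma ex_RInt_gamma_integrand (s a b : R) : 0 < a -> a <= b -> ex_RInt (gamma_integrand s) a b.
Proof.
  intros Ha Hab. apply ex_RInt_continuous_R. intros z Hz. rewrite Rmin_left in Hz by lra.
  apply ex_derive_continuous_R. unfold gamma_integrand, Rpower. auto_derive. lra.
Qed.

Lemma Rpower_le_exp_half (r : R) : exists K, 0 < K /\ forall t, 1 <= t -> Rpower t r <= K * exp (t / 2).
Proof.
  destruct (archimed r) as [Hup _].
  set (N := Z.to_nat (up r)).
  assert (HN : r <= INR N).
  { unfold N. destruct (Z.le_gt_cases 0 (up r)) as [Hz|Hz].
    - rewrite INR_IZR_INZ, Z2Nat.id by auto. lra.
    - assert (IZR (up r) < 0) by (apply IZR_lt; lia).
      replace (Z.to_nat (up r)) with 0%nat by lia. simpl. lra. }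
  exists (INR (fact N) * 2 ^ N). split.
  { apply Rmult_lt_0_compat; [apply lt_0_INR, lt_O_fact | apply pow_lt; lra]. }
  intros t Ht.
  apply Rle_trans with (Rpower t (INR N)); [apply Rle_Rpower; auto|].
  rewrite Rpower_pow by lra.
  assert (Htaylor := exp_ge_taylor (t / 2) N ltac:(lra)).
  assert (Hlast : (t / 2) ^ N / INR (fact N) <= sum_f_R0 (fun k => (t / 2) ^ k / INR (fact k)) N).
  { destruct N; [simpl; lra|]. rewrite tech5.
    assert (0 <= sum_f_R0 (fun k => (t / 2) ^ k / INR (fact k)) N); [|lra].
    apply cond_pos_sum. intros. apply Rdiv_le_0_compat; [apply pow_le; lra | apply lt_0_INR, lt_O_fact]. }
  replace (t ^ N) with (INR (fact N) * 2 ^ N * ((t / 2) ^ N / INR (fact N))).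
  - apply Rmult_le_compat_l; [apply Rmult_le_pos; [apply pos_INR | apply pow_le; lra] | lra].
  - replace (t / 2) with (t * / 2) by reflexivity. rewrite Rpow_mult_distr, pow_inv.
    field. split; [apply pow_nonzero; lra | apply INR_fact_neq_0].
Qed.

Lemma RInt_gamma_integrand_near_0 (s a : R) : 0 < s -> 0 < a <= 1 ->
  RInt (gamma_integrand s) a 1 <= 1 / s.
Proof.
  intros Hs Ha.
  assert (Hd : is_RInt (fun t => exp ((s - 1) * ln t)) a 1
                 (minus (exp (s * ln 1) / s) (exp (s * ln a) / s))).
  { apply (is_RInt_derive (fun t => exp (s * ln t) / s)).
    - intros x Hx. rewrite Rmin_left, Rmax_right in Hx by lra.
      auto_derive; [lra|].
      replace (s - 1) with (s + -1) by ring. rewrite Rmult_plus_distr_r, exp_plus.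
      replace (-1 * ln x) with (- ln x) by ring. rewrite exp_Ropp, exp_ln by lra. field. lra.
    - intros x Hx. rewrite Rmin_left, Rmax_right in Hx by lra.
      apply ex_derive_continuous_R. auto_derive. lra. }
  apply Rle_trans with (RInt (fun t => exp ((s - 1) * ln t)) a 1).
  - apply RInt_le; [lra | apply ex_RInt_gamma_integrand; lra | eexists; exact Hd|].
    intros t Ht. unfold gamma_integrand, Rpower.
    rewrite <- (Rmult_1_r (exp ((s - 1) * ln t))) at 2.
    apply Rmult_le_compat_l; [left; apply exp_pos|].
    rewrite <- exp_0. apply exp_le. lra.
  - rewrite (is_RInt_unique _ _ _ _ Hd). unfold minus, plus, opp; simpl.
    rewrite ln_1, Rmult_0_r, exp_0.
    assert (0 < exp (s * ln a) / s) by (apply Rdiv_lt_0_compat; [apply exp_pos | lra]).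
    unfold Rdiv in *. lra.
Qed.

Lemma RInt_gamma_integrand_near_infty (s : R) :
  exists C, forall b, 1 <= b -> RInt (gamma_integrand s) 1 b <= C.
Proof.
  destruct (Rpower_le_exp_half (s - 1)) as [K [HK HKb]].
  exists (2 * K). intros b Hb.
  assert (Hd : is_RInt (fun t => K * exp (- t / 2)) 1 b
                 (minus (-2 * K * exp (- b / 2)) (-2 * K * exp (- 1 / 2)))).
  { apply (is_RInt_derive (fun t => -2 * K * exp (- t / 2))).
    - intros x Hx. auto_derive; [auto|]. change (- x * / 2) with (- x / 2). field.
    - intros x Hx. apply ex_derive_continuous_R. auto_derive. auto. }
  apply Rle_trans with (RInt (fun t => K * exp (- t / 2)) 1 b).
  - apply RInt_le; [lra | apply ex_RInt_gamma_integrand; lra | eexists; exact Hd|].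
    intros t Ht. unfold gamma_integrand.
    replace (K * exp (- t / 2)) with (K * exp (t / 2) * exp (- t))
      by (rewrite Rmult_assoc, <- exp_plus; do 2 f_equal; field).
    apply Rmult_le_compat_r; [left; apply exp_pos | apply HKb; lra].
  - rewrite (is_RInt_unique _ _ _ _ Hd). unfold minus, plus, opp; simpl.
    assert (0 < exp (- b / 2)) by apply exp_pos.
    assert (exp (- 1 / 2) <= 1) by (rewrite <- exp_0; apply exp_le; lra).
    nra.
Qed.

Lemma RInt_gamma_integrand_bounded (s : R) : 0 < s ->
  exists C, forall a b, 0 < a -> a <= b -> RInt (gamma_integrand s) a b <= C.
Proof.
  intros Hs. destruct (RInt_gamma_integrand_near_infty s) as [C HC].
  exists (1 / s + C). intros a b Ha Hab.
  assert (Ha' : 0 < Rmin a 1 <= 1 /\ Rmin a 1 <= a)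
    by (split; [split; [apply Rmin_glb_lt; lra | apply Rmin_r] | apply Rmin_l]).
  assert (Hb' : 1 <= Rmax b 1 /\ b <= Rmax b 1) by (split; [apply Rmax_r | apply Rmax_l]).
  apply Rle_trans with (RInt (gamma_integrand s) (Rmin a 1) (Rmax b 1)).
  - apply RInt_nonneg_le_wider; try lra.
    + intros; apply gamma_integrand_nonneg.
    + intros; apply ex_RInt_gamma_integrand; auto.
  - rewrite <- (RInt_Chasles (gamma_integrand s) (Rmin a 1) 1 (Rmax b 1))
      by (apply ex_RInt_gamma_integrand; lra).
    unfold plus; simpl.
    assert (RInt (gamma_integrand s) (Rmin a 1) 1 <= 1 / s) by (apply RInt_gamma_integrand_near_0; lra).
    assert (RInt (gamma_integrand s) 1 (Rmax b 1) <= C) by (apply HC; lra).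
    lra.
Qed.

Lemma RInt_gamma_integrand_1_2_pos (s : R) : 0 < RInt (gamma_integrand s) 1 2.
Proof.
  set (m := exp (- (Rabs (s - 1) * ln 2)) * exp (- 2)).
  assert (Hm : 0 < m) by (unfold m; apply Rmult_lt_0_compat; apply exp_pos).
  apply Rlt_le_trans with (RInt (fun _ => m) 1 2).
  { rewrite RInt_const. unfold scal; simpl; unfold mult; simpl. lra. }
  apply RInt_le; [lra | apply ex_RInt_const | apply ex_RInt_gamma_integrand; lra|].
  intros t Ht. unfold m, gamma_integrand, Rpower.
  apply Rmult_le_compat; try (left; apply exp_pos); apply exp_le; [|lra].
  assert (0 < ln t) by (rewrite <- ln_1; apply ln_increasing; lra).
  assert (ln t < ln 2) by (apply ln_increasing; lra).
  destruct (Rle_or_lt 0 (s - 1)).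
  - rewrite Rabs_pos_eq by lra. nra.
  - rewrite Rabs_left by lra. nra.
Qed.

Lemma is_RInt_gen_Gamma (s : R) : 0 < s -> is_RInt_gen (gamma_integrand s) F0 Finf (Gamma s).
Proof.
  intros Hs. destruct (RInt_gamma_integrand_bounded s Hs) as [C HC].
  destruct (is_RInt_gen_nonneg_bounded (gamma_integrand s)) with (C := C) as [L [HL _]]; auto.
  - intros; apply gamma_integrand_nonneg.
  - intros; apply ex_RInt_gamma_integrand; auto.
  - replace (Gamma s) with L; [exact HL|].
    symmetry. exact (is_RInt_gen_unique (gamma_integrand s) L HL).
Qed.

Lemma Gamma_pos (s : R) : 0 < s -> 0 < Gamma s.
Proof.
  intros Hs. apply Rlt_le_trans with (RInt (gamma_integrand s) 1 2);
    [apply RInt_gamma_integrand_1_2_pos|].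
  apply (RInt_le_is_RInt_gen_nonneg (gamma_integrand s)); try lra.
  - intros; apply gamma_integrand_nonneg.
  - intros; apply ex_RInt_gamma_integrand; auto.
  - apply is_RInt_gen_Gamma, Hs.
Qed.

Section GammaRecurrence.

Variable r : R.
Hypothesis Hr : 0 < r.

(* [-t^r e^(-t)] is an antiderivative of [gamma_integrand (r + 1) - r * gamma_integrand r]. *)
Let F (t : R) : R := - (exp (r * ln t) * exp (- t)).
Let G (t : R) : R := exp (r * ln t) * exp (- t) - r * (exp ((r - 1) * ln t) * exp (- t)).

Lemma antiderivative_is_derive (t : R) : 0 < t -> is_derive F t (G t).
Proof.
  intros Ht. unfold F, G. auto_derive; [lra|].
  replace (r - 1) with (r + -1) by ring. rewrite Rmult_plus_distr_r, exp_plus.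
  replace (-1 * ln t) with (- ln t) by ring. rewrite (exp_Ropp (ln t)), exp_ln by lra.
  field. repeat split; try lra; apply Rgt_not_eq, exp_pos.
Qed.

Lemma antiderivative_lim_0 : filterlim F F0 (locally 0).
Proof.
  apply (filterlim_locally (F := F0)). intros eps.
  assert (Heps : 0 < eps) by (destruct eps; auto).
  exists (mkposreal (exp (ln eps / r)) (exp_pos _)). intros t Ht Htp.
  apply (proj1 (ball_R_abs _ _ _)) in Ht. simpl in Ht.
  rewrite Rminus_0_r, Rabs_pos_eq in Ht by lra.
  apply ball_R_abs. unfold F.
  rewrite Rminus_0_r, Rabs_Ropp, Rabs_pos_eq by (apply Rmult_le_pos; left; apply exp_pos).
  assert (exp (- t) <= 1) by (rewrite <- exp_0; apply exp_le; lra).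
  assert (Hlt : r * ln t < ln eps).
  { apply (ln_increasing t) in Ht; [|auto]. rewrite ln_exp in Ht.
    apply Rmult_lt_compat_l with (r := r) in Ht; auto.
    replace (r * (ln eps / r)) with (ln eps) in Ht by (field; lra). auto. }
  assert (exp (r * ln t) < eps) by (rewrite <- (exp_ln eps) by lra; apply exp_increasing, Hlt).
  assert (0 < exp (r * ln t)) by apply exp_pos.
  assert (0 < exp (- t)) by apply exp_pos.
  nra.
Qed.

Lemma antiderivative_lim_infty : filterlim F Finf (locally 0).
Proof.
  apply (filterlim_locally (F := Finf)). intros eps.
  assert (Heps : 0 < eps) by (destruct eps; auto).
  destruct (Rpower_le_exp_half r) as [K [HK HKb]].
  exists (Rmax 1 (2 * K / eps)). intros t Ht.
  assert (Ht1 : 1 < t) by (apply Rle_lt_trans with (Rmax 1 (2 * K / eps)); [apply Rmax_l | auto]).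
  assert (Ht2 : 2 * K / eps < t) by (apply Rle_lt_trans with (Rmax 1 (2 * K / eps)); [apply Rmax_r | auto]).
  apply ball_R_abs. unfold F.
  rewrite Rminus_0_r, Rabs_Ropp, Rabs_pos_eq by (apply Rmult_le_pos; left; apply exp_pos).
  assert (Hpow := HKb t ltac:(lra)). unfold Rpower in Hpow.
  assert (Hexp : t / 2 < exp (t / 2)) by (assert (H := exp_ineq1_le (t / 2)); lra).
  assert (E : exp (- t) = / exp (t / 2) * / exp (t / 2))
    by (rewrite <- !exp_Ropp, <- exp_plus; f_equal; field).
  assert (0 < exp (t / 2)) by apply exp_pos.
  apply Rle_lt_trans with (K * exp (t / 2) * exp (- t));
    [apply Rmult_le_compat_r; [left; apply exp_pos | auto]|].
  rewrite E. replace (K * exp (t / 2) * (/ exp (t / 2) * / exp (t / 2))) with (K / exp (t / 2))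
    by (field; lra).
  apply Rlt_trans with (K / (t / 2)).
  { apply Rmult_lt_compat_l; auto. apply Rinv_lt_contravar; nra. }
  apply Rmult_lt_reg_r with (t / 2); [lra|].
  replace (K / (t / 2) * (t / 2)) with K by (field; lra).
  apply Rmult_lt_reg_r with (/ eps); [apply Rinv_0_lt_compat; auto|].
  replace (eps * (t / 2) * / eps) with (t / 2) by (field; lra).
  unfold Rdiv in Ht2. lra.
Qed.

Lemma Gamma_succ : Gamma (r + 1) = r * Gamma r.
Proof.
  assert (HD : is_RInt_gen (Derive F) F0 Finf (0 - 0)).
  { apply is_RInt_gen_Derive.
    - apply filter_prod_pos. intros x Hx. exists (G x). now apply antiderivative_is_derive.
    - apply filter_prod_pos. intros x Hx.
      apply (continuous_ext_loc _ G).
      + exists (mkposreal x Hx). intros y Hy. apply (proj1 (ball_R_abs _ _ _)) in Hy.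
        simpl in Hy. apply Rabs_def2 in Hy.
        symmetry. apply is_derive_unique, antiderivative_is_derive. lra.
      + apply ex_derive_continuous_R. unfold G. auto_derive. lra.
    - apply antiderivative_lim_0.
    - apply antiderivative_lim_infty. }
  assert (HD' : is_RInt_gen (fun t => gamma_integrand (r + 1) t - r * gamma_integrand r t) F0 Finf (0 - 0)).
  { eapply is_RInt_gen_ext_pos; [|exact HD].
    intros t Ht. rewrite (is_derive_unique _ _ _ (antiderivative_is_derive t Ht)).
    unfold G, gamma_integrand, Rpower. replace (r + 1 - 1) with r by ring. ring. }
  assert (HM := is_RInt_gen_minus_R _ _ _ _ (is_RInt_gen_Gamma (r + 1) ltac:(lra))
                  (is_RInt_gen_scal_R _ _ r (is_RInt_gen_Gamma r Hr))).
  assert (E := eq_trans (eq_sym (is_RInt_gen_unique _ _ HM)) (is_RInt_gen_unique _ _ HD')).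
  simpl in E. lra.
Qed.

End GammaRecurrence.

Fixpoint rising (a : R) (j : nat) : R :=
  match j with O => 1 | S j => rising a j * (a + INR j) end.

Lemma Gamma_plus_nat (s : R) (j : nat) : 0 < s -> Gamma (s + INR j) = rising s j * Gamma s.
Proof.
  intros Hs. induction j as [|j IH]; [simpl; rewrite Rplus_0_r; ring|].
  rewrite S_INR. replace (s + (INR j + 1)) with ((s + INR j) + 1) by ring.
  assert (0 <= INR j) by apply pos_INR.
  rewrite Gamma_succ, IH by lra. simpl. ring.
Qed.

(* Moments of the Gamma law with shape [s] and rate [c]. *)
Definition gamma_moment (s c : R) (j : nat) : R := rising s j / c ^ j.

Lemma gamma_moment_0 (s c : R) : gamma_moment s c 0 = 1.
Proof. unfold gamma_moment. simpl. field. Qed.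

Section GammaKernel.

Variables beta eta : R.
Variable k : nat.
Hypothesis Hbeta : 0 < beta.
Hypothesis Heta : 0 < eta.
Hypothesis Hk : (1 <= k)%nat.

Let Hc : 0 < eta * beta.
Proof. nra. Qed.
Let Hs : 0 < INR k * beta.
Proof. assert (1 <= INR k) by (apply (le_INR 1); auto). nra. Qed.

Lemma I_ker_nonneg (z : R) : 0 < z -> 0 <= I_ker beta eta k z.
Proof.
  intros Hz. unfold I_ker.
  apply Rdiv_le_0_compat; [|now apply Gamma_pos].
  apply Rmult_le_pos; [apply Rmult_le_pos; [nra | left; apply exp_pos]|].
  unfold Rpower; left; apply exp_pos.
Qed.

Lemma I_ker_continuous (z : R) : 0 < z -> continuous (I_ker beta eta k) z.
Proof.
  intros Hz. apply ex_derive_continuous_R. unfold I_ker, Rpower. auto_derive.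
  apply Rmult_lt_0_compat; nra.
Qed.

Lemma is_RInt_gen_I_ker_pow (j : nat) :
  is_RInt_gen (fun z => I_ker beta eta k z * z ^ j) F0 Finf
    (gamma_moment (INR k * beta) (eta * beta) j).
Proof.
  set (c := eta * beta) in *. set (s := INR k * beta) in *.
  assert (Hj : 0 < s + INR j) by (assert (0 <= INR j) by apply pos_INR; lra).
  assert (HGs := Gamma_pos s Hs).
  assert (H := is_RInt_gen_scal_R _ _ (/ (Gamma s * c ^ j))
                 (is_RInt_gen_scale_var _ _ c Hc (is_RInt_gen_Gamma _ Hj))).
  replace (gamma_moment s c j) with (/ (Gamma s * c ^ j) * Gamma (s + INR j)).
  2:{ unfold gamma_moment. rewrite Gamma_plus_nat by lra.
      assert (0 < c ^ j) by (apply pow_lt; lra). field. lra. }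
  eapply is_RInt_gen_ext_pos; [|exact H].
  intros z Hz. unfold I_ker, gamma_integrand. fold c. fold s.
  assert (Hcz : 0 < c * z) by nra.
  replace (s + INR j - 1) with ((s - 1) + INR j) by ring.
  rewrite Rpower_plus, Rpower_pow by auto.
  replace (- eta * beta * z) with (- (c * z)) by (unfold c; ring).
  replace (eta * beta * z) with (c * z) by (unfold c; ring).
  rewrite Rpow_mult_distr.
  assert (0 < c ^ j) by (apply pow_lt; auto).
  field. lra.
Qed.

Lemma is_RInt_gen_I_ker_quartic (e0 e1 e2 e3 e4 : R) :
  is_RInt_gen (fun z => I_ker beta eta k z * (e0 + e1 * z + e2 * z ^ 2 + e3 * z ^ 3 + e4 * z ^ 4)) F0 Finf
    (e0 * gamma_moment (INR k * beta) (eta * beta) 0 + e1 * gamma_moment (INR k * beta) (eta * beta) 1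
     + e2 * gamma_moment (INR k * beta) (eta * beta) 2 + e3 * gamma_moment (INR k * beta) (eta * beta) 3
     + e4 * gamma_moment (INR k * beta) (eta * beta) 4).
Proof.
  assert (M := fun j e => is_RInt_gen_scal_R _ _ e (is_RInt_gen_I_ker_pow j)).
  eapply is_RInt_gen_ext_pos; [|exact (is_RInt_gen_plus_R _ _ _ _ (is_RInt_gen_plus_R _ _ _ _
    (is_RInt_gen_plus_R _ _ _ _ (is_RInt_gen_plus_R _ _ _ _ (M 0%nat e0) (M 1%nat e1))
    (M 2%nat e2)) (M 3%nat e3)) (M 4%nat e4))].
  intros z _. simpl. ring.
Qed.

Lemma ex_RInt_gen_I_ker_mult (f : R -> R) (M : R) :
  (forall z, 0 < z -> continuous f z) -> (forall z, 0 < z -> Rabs (f z) <= M) ->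
  ex_RInt_gen (fun z => I_ker beta eta k z * f z) F0 Finf.
Proof.
  intros Hf HM.
  eapply (ex_RInt_gen_dominated _ (fun z => I_ker beta eta k z * M)).
  - intros a b Ha Hab. apply ex_RInt_continuous_R. intros z Hz. rewrite Rmin_left in Hz by lra.
    apply (continuous_mult (K := R_AbsRing)); [apply I_ker_continuous | apply Hf]; lra.
  - intros a b Ha Hab. apply ex_RInt_continuous_R. intros z Hz. rewrite Rmin_left in Hz by lra.
    apply (continuous_mult (K := R_AbsRing)); [apply I_ker_continuous; lra | apply continuous_const].
  - intros z Hz. rewrite Rabs_mult, (Rabs_pos_eq (I_ker _ _ _ _)) by (apply I_ker_nonneg; auto).
    apply Rmult_le_compat_l; [apply I_ker_nonneg | apply HM]; auto.
  - eapply is_RInt_gen_ext_pos; [|exact (is_RInt_gen_scal_R _ _ M (is_RInt_gen_I_ker_pow 0))].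
    intros z _. simpl. ring.
Qed.

End GammaKernel.

(** * Second-order Taylor expansion on [0, oo) *)

Lemma cont_on_nonneg_continuous (f : R -> R) (z : R) : cont_on_nonneg f -> 0 < z -> continuous f z.
Proof.
  intros Hc Hz. specialize (Hc z (Rlt_le _ _ Hz)).
  apply (filterlim_locally (F := locally z)). intros eps.
  destruct (proj1 (filterlim_locally _ _) Hc eps) as [d Hd].
  assert (Hm : 0 < Rmin d z) by (apply Rmin_glb_lt; [destruct d|]; auto).
  exists (mkposreal _ Hm). intros y Hy. apply (proj1 (ball_R_abs _ _ _)) in Hy. simpl in Hy.
  assert (Rmin d z <= d) by apply Rmin_l. assert (Rmin d z <= z) by apply Rmin_r.
  apply Hd; [apply ball_R_abs; lra | apply Rabs_def2 in Hy; lra].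
Qed.

Lemma deriv_on_nonneg_is_derive (f f' : R -> R) (y : R) :
  deriv_on_nonneg f f' -> 0 < y -> is_derive f y (f' y).
Proof.
  intros Hd Hy. apply is_derive_Reals. intros eps Heps.
  destruct (proj1 (filterlim_locally _ _) (Hd y (Rlt_le _ _ Hy)) (mkposreal eps Heps)) as [d Hd2].
  assert (Hm : 0 < Rmin d y) by (apply Rmin_glb_lt; [destruct d|]; auto).
  exists (mkposreal _ Hm). intros h Hh0 Hh. simpl in Hh.
  assert (Rmin d y <= d) by apply Rmin_l. assert (Rmin d y <= y) by apply Rmin_r.
  assert (Hb : ball 0 d h) by (apply ball_R_abs; rewrite Rminus_0_r; lra).
  assert (Hc : h <> 0 /\ 0 <= y + h) by (split; [auto | apply Rabs_def2 in Hh; lra]).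
  exact (proj1 (ball_R_abs _ _ _) (Hd2 h Hb Hc)).
Qed.

(* Extending [f] by [f 0] to the left turns one-sided hypotheses on [[0, oo)] into
   two-sided ones, as required by the mean value theorem. *)
Lemma continuity_pt_clamp (f : R -> R) (y : R) :
  cont_on_nonneg f -> 0 <= y -> continuity_pt (fun t => f (Rmax 0 t)) y.
Proof.
  intros Hc Hy. apply continuity_pt_filterlim. rewrite Rmax_right by auto.
  apply (filterlim_locally (F := locally y)). intros eps.
  destruct (proj1 (filterlim_locally _ _) (Hc y Hy) eps) as [d Hd]. exists d. intros t Ht.
  apply Hd; [|apply Rmax_l].
  apply ball_R_abs. apply (proj1 (ball_R_abs _ _ _)) in Ht. simpl in Ht |- *.
  unfold Rmax. destruct (Rle_dec 0 t); [auto|].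
  rewrite Rabs_left1 by lra. rewrite Rabs_left in Ht by lra. lra.
Qed.

Lemma is_derive_clamp (f f' : R -> R) (y : R) :
  deriv_on_nonneg f f' -> 0 < y -> is_derive (fun t => f (Rmax 0 t)) y (f' y).
Proof.
  intros Hd Hy. apply (is_derive_ext_loc f); [|now apply deriv_on_nonneg_is_derive].
  exists (mkposreal y Hy). intros t Ht. apply (proj1 (ball_R_abs _ _ _)) in Ht.
  simpl in Ht. apply Rabs_def2 in Ht. rewrite Rmax_right by lra. reflexivity.
Qed.

Lemma Rabs_between_le (a c z : R) : Rmin a z <= c <= Rmax a z -> Rabs (c - a) <= Rabs (z - a).
Proof.
  unfold Rmin, Rmax. destruct (Rle_dec a z); intros Hc.
  - rewrite !Rabs_pos_eq by lra. lra.
  - rewrite !Rabs_left1 by lra. lra.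
Qed.

Section Taylor.

Variables (Phi Phi1 Phi2 : R -> R) (x : R).
Hypothesis Hd1 : deriv_on_nonneg Phi Phi1.
Hypothesis Hd2 : deriv_on_nonneg Phi1 Phi2.
Hypothesis Hc0 : cont_on_nonneg Phi.
Hypothesis Hc1 : cont_on_nonneg Phi1.
Hypothesis Hx : 0 <= x.

Definition taylor2_rem (z : R) : R :=
  Phi z - Phi x - Phi1 x * (z - x) - Phi2 x * (z - x) ^ 2 / 2.

Lemma taylor1_mvt (y : R) : 0 <= y -> exists c, 0 <= c /\ Rabs (c - x) <= Rabs (y - x) /\
  Phi1 y - Phi1 x - Phi2 x * (y - x) = (Phi2 c - Phi2 x) * (y - x).
Proof.
  intros Hy. assert (Hmin : 0 <= Rmin x y) by (apply Rmin_glb; auto).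
  destruct (MVT_gen (fun t => Phi1 (Rmax 0 t) - Phi2 x * t) x y (fun t => Phi2 t - Phi2 x))
    as [c [Hc E]].
  - intros t Ht.
    apply (is_derive_minus (K := R_AbsRing) (V := R_NormedModule) (fun t => Phi1 (Rmax 0 t)) (fun t => Phi2 x * t)).
    + apply is_derive_clamp; [auto | lra].
    + auto_derive; auto. ring.
  - intros t Ht. apply continuity_pt_minus; [apply continuity_pt_clamp; auto; lra|].
    apply continuity_pt_filterlim, ex_derive_continuous_R. auto_derive. auto.
  - exists c. split; [lra|]. split; [now apply Rabs_between_le|].
    rewrite !Rmax_right in E by lra. lra.
Qed.

Lemma taylor2_rem_mvt (z : R) : 0 <= z -> exists c, 0 <= c /\ Rabs (c - x) <= Rabs (z - x) /\
  Rabs (taylor2_rem z) <= Rabs (Phi2 c - Phi2 x) * (z - x) ^ 2.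
Proof.
  intros Hz. assert (Hmin : 0 <= Rmin x z) by (apply Rmin_glb; auto).
  set (P := fun t => - Phi x - Phi1 x * (t - x) - Phi2 x * (t - x) ^ 2 / 2).
  destruct (MVT_gen (fun t => Phi (Rmax 0 t) + P t) x z
     (fun t => Phi1 t - Phi1 x - Phi2 x * (t - x))) as [c2 [Hc2 E]].
  - intros t Ht.
    replace (Phi1 t - Phi1 x - Phi2 x * (t - x)) with (plus (Phi1 t) (- Phi1 x - Phi2 x * (t - x)))
      by (unfold plus; simpl; ring).
    apply (is_derive_plus (fun t => Phi (Rmax 0 t)) P); [apply is_derive_clamp; [auto | lra]|].
    unfold P. auto_derive; auto. field.
  - intros t Ht. apply continuity_pt_plus; [apply continuity_pt_clamp; auto; lra|].
    apply continuity_pt_filterlim, ex_derive_continuous_R. unfold P. auto_derive. auto.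
  - destruct (taylor1_mvt c2 ltac:(lra)) as [c1 [Hc1pos [Hd E1]]].
    assert (Hc2x := Rabs_between_le _ _ _ Hc2).
    exists c1. split; [auto|]. split; [lra|].
    rewrite !Rmax_right in E by auto. unfold P in E.
    replace (taylor2_rem z) with ((Phi2 c1 - Phi2 x) * (c2 - x) * (z - x)).
    2:{ unfold taylor2_rem. rewrite <- E1. replace ((x - x) ^ 2) with 0 in E by ring. lra. }
    rewrite !Rabs_mult, <- pow2_abs. simpl. rewrite Rmult_1_r, <- Rmult_assoc.
    apply Rmult_le_compat_r; [apply Rabs_pos|].
    apply Rmult_le_compat_l; [apply Rabs_pos | auto].
Qed.

End Taylor.

(* Continuity of [Phi2] at [x] gives [eps] near [x]; boundedness of [Phi2] gives
   the quartic term far from [x]. *)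
Lemma taylor2_rem_bound (Phi Phi1 Phi2 : R -> R) (x : R) :
  deriv_on_nonneg Phi Phi1 -> deriv_on_nonneg Phi1 Phi2 ->
  cont_on_nonneg Phi -> cont_on_nonneg Phi1 -> cont_on_nonneg Phi2 -> bounded_on_nonneg Phi2 ->
  0 <= x -> forall eps, 0 < eps -> exists C, 0 <= C /\ forall z, 0 <= z ->
    Rabs (taylor2_rem Phi Phi1 Phi2 x z) <= eps * (z - x) ^ 2 + C * (z - x) ^ 4.
Proof.
  intros H1 H2 C0 C1 C2 [M HM] Hx eps Heps.
  assert (HM0 : 0 <= M) by (specialize (HM x Hx); assert (0 <= Rabs (Phi2 x)) by apply Rabs_pos; lra).
  destruct (proj1 (filterlim_locally _ _) (C2 x Hx) (mkposreal eps Heps)) as [[d Hd0] Hd].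
  exists (2 * M / (d * d)). split; [apply Rdiv_le_0_compat; nra|].
  intros z Hz. destruct (taylor2_rem_mvt Phi Phi1 Phi2 x H1 H2 C0 C1 Hx z Hz) as [c [Hc [Hcx Hr]]].
  assert (Hq : 0 <= (z - x) ^ 2) by (rewrite <- pow2_abs; apply pow2_ge_0).
  assert (Hq4 : (z - x) ^ 4 = (z - x) ^ 2 * (z - x) ^ 2) by ring.
  assert (HC0 : 0 <= 2 * M / (d * d)) by (apply Rdiv_le_0_compat; nra).
  destruct (Rlt_or_le (Rabs (z - x)) d) as [Hlt|Hge].
  - assert (B : ball x d c) by (apply ball_R_abs; simpl; lra).
    specialize (Hd c B Hc). apply (proj1 (ball_R_abs _ _ _)) in Hd. simpl in Hd.
    assert (Rabs (Phi2 c - Phi2 x) * (z - x) ^ 2 <= eps * (z - x) ^ 2)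
      by (apply Rmult_le_compat_r; lra).
    assert (0 <= 2 * M / (d * d) * (z - x) ^ 4) by (rewrite Hq4; apply Rmult_le_pos; nra).
    lra.
  - assert (Hb : Rabs (Phi2 c - Phi2 x) <= 2 * M).
    { apply Rle_trans with (Rabs (Phi2 c) + Rabs (Phi2 x)); [unfold Rminus; rewrite <- (Rabs_Ropp (Phi2 x)); apply Rabs_triang|].
      assert (HMc := HM c Hc). assert (HMx := HM x Hx). lra. }
    assert (Hz2 : d * d <= (z - x) ^ 2) by (rewrite <- pow2_abs; simpl; nra).
    assert (Rabs (Phi2 c - Phi2 x) * (z - x) ^ 2 <= 2 * M / (d * d) * (z - x) ^ 4).
    { rewrite Hq4. apply Rle_trans with (2 * M * (z - x) ^ 2); [apply Rmult_le_compat_r; auto|].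
      apply Rmult_le_reg_r with (d * d); [nra|].
      replace (2 * M / (d * d) * ((z - x) ^ 2 * (z - x) ^ 2) * (d * d))
        with (2 * M * (z - x) ^ 2 * (z - x) ^ 2) by (field; lra).
      apply Rmult_le_compat_l; nra. }
    assert (0 <= eps * (z - x) ^ 2) by nra.
    lra.
Qed.

(** * Asymptotics of the operator *)

Lemma eta_quadratic_ratio_le (c0 c1 c2 eta beta : R) : 1 <= eta -> 0 < beta ->
  eta * ((c0 + c1 * eta + c2 * eta ^ 2) / (eta ^ 4 * beta ^ 4))
  <= (Rabs c0 + Rabs c1 + Rabs c2) / beta ^ 4 / eta.
Proof.
  intros He Hb.
  assert (Hb4 : 0 < beta ^ 4) by (apply pow_lt; auto).
  assert (He3 : 0 < eta ^ 3) by (apply pow_lt; lra).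
  replace (eta * ((c0 + c1 * eta + c2 * eta ^ 2) / (eta ^ 4 * beta ^ 4)))
    with ((c0 + c1 * eta + c2 * eta ^ 2) / (eta ^ 3 * beta ^ 4)) by (field; lra).
  replace ((Rabs c0 + Rabs c1 + Rabs c2) / beta ^ 4 / eta)
    with ((Rabs c0 + Rabs c1 + Rabs c2) * eta ^ 2 / (eta ^ 3 * beta ^ 4)) by (field; lra).
  apply Rmult_le_compat_r; [left; apply Rinv_0_lt_compat; nra|].
  assert (c0 <= Rabs c0) by apply Rle_abs.
  assert (c1 <= Rabs c1) by apply Rle_abs.
  assert (c2 <= Rabs c2) by apply Rle_abs.
  assert (0 <= Rabs c0) by apply Rabs_pos.
  assert (0 <= Rabs c1) by apply Rabs_pos.
  assert (1 <= eta ^ 2) by nra.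
  assert (c0 <= Rabs c0 * eta ^ 2) by nra.
  assert (c1 * eta <= Rabs c1 * eta) by (apply Rmult_le_compat_r; lra).
  assert (Rabs c1 * eta <= Rabs c1 * eta ^ 2)
    by (apply Rmult_le_compat_l; [lra|]; replace (eta ^ 2) with (eta * eta) by ring; nra).
  assert (c2 * eta ^ 2 <= Rabs c2 * eta ^ 2) by (apply Rmult_le_compat_r; nra).
  lra.
Qed.

Section OperatorExpansion.

Variables (alpha beta : R) (Phi Phi1 Phi2 : R -> R) (x eta : R).
Hypothesis Halpha : -1 < alpha.
Hypothesis Hbeta : 0 < beta.
Hypothesis Hc0 : cont_on_nonneg Phi.
Hypothesis Hb0 : bounded_on_nonneg Phi.
Hypothesis Hx : 0 <= x.
Hypothesis Heta : 0 < eta.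

Let Hetax : 0 <= eta * x.
Proof. nra. Qed.

(* For [k >= 1], the moments of [z - x] under the Gamma law [I_ker beta eta k]. *)
Definition gamma_dev1 (k : nat) : R := gamma_moment (INR k * beta) (eta * beta) 1 - x.
Definition gamma_dev2 (k : nat) : R :=
  gamma_moment (INR k * beta) (eta * beta) 2 - 2 * x * gamma_moment (INR k * beta) (eta * beta) 1 + x ^ 2.
Definition gamma_dev4 (k : nat) : R :=
  gamma_moment (INR k * beta) (eta * beta) 4 - 4 * x * gamma_moment (INR k * beta) (eta * beta) 3
  + 6 * x ^ 2 * gamma_moment (INR k * beta) (eta * beta) 2
  - 4 * x ^ 3 * gamma_moment (INR k * beta) (eta * beta) 1 + x ^ 4.

Definition R_op_coef (k : nat) : R :=
  match k with
  | O => Phi 0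
  | S _ => RInt_gen (fun z => I_ker beta eta k z * Phi z) F0 Finf
  end.

Lemma R_op_coef_bound (M : R) : (forall z, 0 <= z -> Rabs (Phi z) <= M) ->
  forall k, Rabs (R_op_coef k) <= M.
Proof.
  intros HM [|j]; [apply HM; lra|].
  assert (Hk : (1 <= S j)%nat) by lia.
  assert (Hex := ex_RInt_gen_I_ker_mult beta eta (S j) Hbeta Heta Hk Phi M
                  (fun z Hz => cont_on_nonneg_continuous Phi z Hc0 Hz) (fun z Hz => HM z ltac:(lra))).
  assert (Hi := RInt_gen_correct _ Hex).
  assert (HI := is_RInt_gen_I_ker_quartic beta eta (S j) Hbeta Heta Hk M 0 0 0 0).
  rewrite gamma_moment_0, !Rmult_0_l, !Rplus_0_r, Rmult_1_r in HI.
  apply (is_RInt_gen_Rabs_le _ _ _ _ Hi HI). intros z Hz.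
  rewrite Rabs_mult, Rabs_pos_eq by (apply I_ker_nonneg; auto).
  replace (M + 0 * z + 0 * z ^ 2 + 0 * z ^ 3 + 0 * z ^ 4) with M by ring.
  apply Rmult_le_compat_l; [apply I_ker_nonneg; auto | apply HM; lra].
Qed.

Lemma is_series_p_eta : is_series (fun k => p_eta alpha eta k x) 1.
Proof.
  eapply is_series_ext_R; [|apply (is_series_p_eta_quartic alpha eta x Halpha Hetax (fun _ => 1) 1 0 0 0 0)].
  - intros k. simpl. ring.
  - intros k. ring.
  - simpl. ring.
Qed.

Lemma is_series_R_op : is_series (fun k => p_eta alpha eta k x * R_op_coef k) (R_op alpha beta eta Phi x).
Proof.
  destruct Hb0 as [M HM].
  assert (Hex : ex_series (fun k => p_eta alpha eta k x * R_op_coef k)).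
  { apply (ex_series_le (K := R_AbsRing) (V := R_CompleteNormedModule) _ (fun k => M * p_eta alpha eta k x)).
    - intros n. change (norm (p_eta alpha eta n x * R_op_coef n)) with (Rabs (p_eta alpha eta n x * R_op_coef n)).
      rewrite Rabs_mult, Rabs_pos_eq, Rmult_comm by (apply p_eta_nonneg; auto).
      apply Rmult_le_compat_r; [apply p_eta_nonneg; auto | now apply R_op_coef_bound].
    - eexists. apply is_series_scal_R, is_series_p_eta. }
  replace (R_op alpha beta eta Phi x) with (Series (fun k => p_eta alpha eta k x * R_op_coef k))
    by (rewrite (Series_incr_1 _ Hex); reflexivity).
  now apply Series_correct.
Qed.

Lemma is_series_p_eta_dev1 : is_series (fun k => p_eta alpha eta k x * gamma_dev1 k) ((1 + alpha) / eta).
Proof.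
  apply (is_series_p_eta_quartic alpha eta x Halpha Hetax _ (- x) (1 / eta) 0 0 0).
  - intros k. unfold gamma_dev1, gamma_moment. simpl. field. lra.
  - simpl. field. lra.
Qed.

Definition bias_coef : R :=
  beta + 3 * beta ^ 2 + alpha * beta + 4 * alpha * beta ^ 2 + alpha ^ 2 * beta ^ 2.

Definition mean_dev2 : R := x * (1 + 3 * beta) / (eta * beta) + bias_coef / (eta ^ 2 * beta ^ 2).

Lemma is_series_p_eta_dev2 : is_series (fun k => p_eta alpha eta k x * gamma_dev2 k) mean_dev2.
Proof.
  apply (is_series_p_eta_quartic alpha eta x Halpha Hetax _
           (x ^ 2) (1 / (beta * eta ^ 2) - 2 * x / eta) (1 / eta ^ 2) 0 0).
  - intros k. unfold gamma_dev2, gamma_moment. simpl. field. lra.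
  - unfold mean_dev2, bias_coef. simpl. field. lra.
Qed.

Definition dev4_coef0 : R :=
  6 * beta + 33 * beta ^ 2 + 78 * beta ^ 3 + 75 * beta ^ 4 + 6 * alpha * beta + 44 * alpha * beta ^ 2
  + 126 * alpha * beta ^ 3 + 138 * alpha * beta ^ 4 + 11 * alpha ^ 2 * beta ^ 2 + 54 * alpha ^ 2 * beta ^ 3
  + 78 * alpha ^ 2 * beta ^ 4 + 6 * alpha ^ 3 * beta ^ 3 + 16 * alpha ^ 3 * beta ^ 4 + alpha ^ 4 * beta ^ 4.
Definition dev4_coef1 : R :=
  6 * x * beta + 47 * x * beta ^ 2 + 150 * x * beta ^ 3 + 181 * x * beta ^ 4 + 14 * alpha * x * beta ^ 2
  + 78 * alpha * x * beta ^ 3 + 124 * alpha * x * beta ^ 4 + 6 * alpha ^ 2 * x * beta ^ 3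
  + 18 * alpha ^ 2 * x * beta ^ 4.
Definition dev4_coef2 : R := 3 * x ^ 2 * beta ^ 2 + 18 * x ^ 2 * beta ^ 3 + 27 * x ^ 2 * beta ^ 4.
Definition mean_dev4 : R :=
  (dev4_coef0 + dev4_coef1 * eta + dev4_coef2 * eta ^ 2) / (eta ^ 4 * beta ^ 4).

Lemma is_series_p_eta_dev4 : is_series (fun k => p_eta alpha eta k x * gamma_dev4 k) mean_dev4.
Proof.
  set (den := eta ^ 4 * beta ^ 4).
  apply (is_series_p_eta_quartic alpha eta x Halpha Hetax _
    (eta ^ 4 * x ^ 4 * beta ^ 4 / den)
    ((6 * beta - 8 * eta * x * beta ^ 2 + 6 * eta ^ 2 * x ^ 2 * beta ^ 3 - 4 * eta ^ 3 * x ^ 3 * beta ^ 4) / den)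
    ((11 * beta ^ 2 - 12 * eta * x * beta ^ 3 + 6 * eta ^ 2 * x ^ 2 * beta ^ 4) / den)
    ((6 * beta ^ 3 - 4 * eta * x * beta ^ 4) / den)
    (beta ^ 4 / den)).
  - intros k. unfold gamma_dev4, gamma_moment, den. simpl. field. lra.
  - unfold mean_dev4, dev4_coef0, dev4_coef1, dev4_coef2, den. simpl. field. lra.
Qed.

Section TaylorError.

Variables eps C : R.
Hypothesis HC : forall z, 0 <= z ->
  Rabs (taylor2_rem Phi Phi1 Phi2 x z) <= eps * (z - x) ^ 2 + C * (z - x) ^ 4.

Lemma R_op_coef_taylor (k : nat) :
  Rabs (R_op_coef k - (Phi x + Phi1 x * gamma_dev1 k + Phi2 x / 2 * gamma_dev2 k))
  <= eps * gamma_dev2 k + C * gamma_dev4 k.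
Proof.
  destruct k as [|j].
  - assert (H0 := HC 0 (Rle_refl 0)). unfold taylor2_rem in H0.
    unfold gamma_dev1, gamma_dev2, gamma_dev4, gamma_moment. simpl.
    replace (Phi 0 - _) with (Phi 0 - Phi x - Phi1 x * (0 - x) - Phi2 x * (0 - x) ^ 2 / 2) by (field; lra).
    replace (eps * _ + _) with (eps * (0 - x) ^ 2 + C * (0 - x) ^ 4) by (field; lra).
    exact H0.
  - set (k := S j). assert (Hk : (1 <= k)%nat) by (unfold k; lia).
    destruct Hb0 as [M HM].
    assert (Hex := ex_RInt_gen_I_ker_mult beta eta k Hbeta Heta Hk Phi M
                     (fun z Hz => cont_on_nonneg_continuous Phi z Hc0 Hz) (fun z Hz => HM z ltac:(lra))).
    assert (Hi := RInt_gen_correct _ Hex).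
    assert (HP := is_RInt_gen_I_ker_quartic beta eta k Hbeta Heta Hk
                    (Phi x - Phi1 x * x + Phi2 x * x ^ 2 / 2) (Phi1 x - Phi2 x * x) (Phi2 x / 2) 0 0).
    assert (HB := is_RInt_gen_I_ker_quartic beta eta k Hbeta Heta Hk (eps * x ^ 2 + C * x ^ 4)
                    (- 2 * eps * x - 4 * C * x ^ 3) (eps + 6 * C * x ^ 2) (- 4 * C * x) C).
    assert (E := is_RInt_gen_Rabs_le _ _ _ _ (is_RInt_gen_minus_R _ _ _ _ Hi HP) HB).
    unfold gamma_dev1, gamma_dev2, gamma_dev4. change (R_op_coef k) with (RInt_gen (fun z => I_ker beta eta k z * Phi z) F0 Finf).
    match type of E with _ -> Rabs ?a <= ?b => replace (RInt_gen _ _ _ - _) with a; [replace (eps * _ + _) with b|] end.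
    + apply E. intros z Hz. rewrite <- Rmult_minus_distr_l, Rabs_mult, (Rabs_pos_eq (I_ker _ _ _ _))
        by (apply I_ker_nonneg; auto).
      apply Rmult_le_compat_l; [apply I_ker_nonneg; auto|].
      assert (Hz' := HC z ltac:(lra)). unfold taylor2_rem in Hz'.
      replace (Phi z - _) with (Phi z - Phi x - Phi1 x * (z - x) - Phi2 x * (z - x) ^ 2 / 2) by (simpl; field).
      replace (eps * x ^ 2 + C * x ^ 4 + (- 2 * eps * x - 4 * C * x ^ 3) * z + (eps + 6 * C * x ^ 2) * z ^ 2
               + (- 4 * C * x) * z ^ 3 + C * z ^ 4)
        with (eps * (z - x) ^ 2 + C * (z - x) ^ 4) by ring.
      exact Hz'.
    + rewrite gamma_moment_0. ring.
    + rewrite gamma_moment_0. field.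
Qed.

Lemma R_op_error_bound :
  Rabs (eta * (R_op alpha beta eta Phi x - Phi x)
        - ((1 + alpha) * Phi1 x + x * (3 * beta + 1) / (2 * beta) * Phi2 x))
  <= Rabs (Phi2 x) / 2 * (Rabs bias_coef / (eta * beta ^ 2)) + eta * (eps * mean_dev2 + C * mean_dev4).
Proof.
  set (S := R_op alpha beta eta Phi x).
  set (T := S - Phi x - Phi1 x * ((1 + alpha) / eta) - Phi2 x / 2 * mean_dev2).
  assert (HT : Rabs T <= eps * mean_dev2 + C * mean_dev4).
  { assert (HW := is_series_plus_R _ _ _ _ (is_series_plus_R _ _ _ _ (is_series_plus_R _ _ _ _ is_series_R_op
        (is_series_scal_R (- Phi x) _ _ is_series_p_eta))
        (is_series_scal_R (- Phi1 x) _ _ is_series_p_eta_dev1))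
        (is_series_scal_R (- (Phi2 x / 2)) _ _ is_series_p_eta_dev2)).
    replace T with (S + - Phi x * 1 + - Phi1 x * ((1 + alpha) / eta) + - (Phi2 x / 2) * mean_dev2)
      by (unfold T; ring).
    apply (is_series_Rabs_le _ _ _ _ HW (is_series_plus_R _ _ _ _
      (is_series_scal_R eps _ _ is_series_p_eta_dev2) (is_series_scal_R C _ _ is_series_p_eta_dev4))).
    intros k. replace (_ + _) with (p_eta alpha eta k x * (R_op_coef k -
      (Phi x + Phi1 x * gamma_dev1 k + Phi2 x / 2 * gamma_dev2 k))) by ring.
    rewrite Rabs_mult, Rabs_pos_eq by (apply p_eta_nonneg; auto).
    replace (eps * _ + C * _) with (p_eta alpha eta k x * (eps * gamma_dev2 k + C * gamma_dev4 k)) by ring.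
    apply Rmult_le_compat_l; [apply p_eta_nonneg; auto | apply R_op_coef_taylor]. }
  replace (eta * (S - Phi x) - _) with (Phi2 x / 2 * (bias_coef / (eta * beta ^ 2)) + eta * T)
    by (unfold T, mean_dev2; field; lra).
  eapply Rle_trans; [apply Rabs_triang|]. apply Rplus_le_compat.
  - unfold Rdiv. rewrite !Rabs_mult, !Rabs_inv, (Rabs_pos_eq 2), (Rabs_pos_eq (eta * beta ^ 2)) by nra.
    lra.
  - rewrite Rabs_mult, (Rabs_pos_eq eta) by lra. apply Rmult_le_compat_l; lra.
Qed.

Lemma eta_mean_dev2_le : 1 <= eta ->
  eta * mean_dev2 <= x * (1 + 3 * beta) / beta + Rabs bias_coef / beta ^ 2.
Proof.
  intros Hge. unfold mean_dev2.
  replace (eta * _) with (x * (1 + 3 * beta) / beta + bias_coef / beta ^ 2 / eta) by (field; lra).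
  apply Rplus_le_compat_l.
  assert (Hb2 : 0 < beta ^ 2) by nra.
  apply Rle_trans with (Rabs bias_coef / beta ^ 2 / eta).
  - unfold Rdiv. apply Rmult_le_compat_r; [left; apply Rinv_0_lt_compat; lra|].
    apply Rmult_le_compat_r; [left; apply Rinv_0_lt_compat; lra | apply Rle_abs].
  - assert (0 <= Rabs bias_coef / beta ^ 2) by (apply Rdiv_le_0_compat; [apply Rabs_pos | lra]).
    apply Rmult_le_reg_r with eta; [lra|].
    replace (Rabs bias_coef / beta ^ 2 / eta * eta) with (Rabs bias_coef / beta ^ 2) by (field; lra).
    nra.
Qed.

Lemma R_op_error_le : 1 <= eta -> 0 <= eps -> 0 <= C ->
  Rabs (eta * (R_op alpha beta eta Phi x - Phi x)
        - ((1 + alpha) * Phi1 x + x * (3 * beta + 1) / (2 * beta) * Phi2 x))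
  <= eps * (x * (1 + 3 * beta) / beta + Rabs bias_coef / beta ^ 2)
     + (Rabs (Phi2 x) / 2 * (Rabs bias_coef / beta ^ 2)
        + C * ((Rabs dev4_coef0 + Rabs dev4_coef1 + Rabs dev4_coef2) / beta ^ 4)) / eta.
Proof.
  intros Hge Heps HC0. eapply Rle_trans; [apply R_op_error_bound|].
  assert (H2 := eta_mean_dev2_le Hge).
  assert (H4 := eta_quadratic_ratio_le dev4_coef0 dev4_coef1 dev4_coef2 eta beta Hge Hbeta).
  fold mean_dev4 in H4.
  replace (Rabs (Phi2 x) / 2 * (Rabs bias_coef / (eta * beta ^ 2)) + eta * (eps * mean_dev2 + C * mean_dev4))
    with (Rabs (Phi2 x) / 2 * (Rabs bias_coef / beta ^ 2) / eta
          + eps * (eta * mean_dev2) + C * (eta * mean_dev4)) by (field; nra).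
  assert (eps * (eta * mean_dev2) <= eps * (x * (1 + 3 * beta) / beta + Rabs bias_coef / beta ^ 2))
    by (apply Rmult_le_compat_l; auto).
  assert (C * (eta * mean_dev4) <= C * ((Rabs dev4_coef0 + Rabs dev4_coef1 + Rabs dev4_coef2) / beta ^ 4 / eta))
    by (apply Rmult_le_compat_l; auto).
  unfold Rdiv in *. lra.
Qed.

End TaylorError.


End OperatorExpansion.

Lemma is_lim_p_infty_of_bound (f : R -> R) (l X : R) : 0 <= X ->
  (forall eps, 0 < eps -> exists K, forall eta, 1 <= eta -> Rabs (f eta - l) <= eps * X + K / eta) ->
  is_lim f p_infty l.
Proof.
  intros HX Hbound. apply is_lim_spec. intros [eps Heps]. simpl.
  destruct (Hbound (eps / (2 * (X + 1)))) as [K HK]; [apply Rdiv_lt_0_compat; lra|].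
  exists (Rmax 1 (2 * Rabs K / eps)). intros eta Heta.
  assert (He1 : 1 < eta) by (eapply Rle_lt_trans; [apply Rmax_l | exact Heta]).
  assert (He2 : 2 * Rabs K / eps < eta) by (eapply Rle_lt_trans; [apply Rmax_r | exact Heta]).
  eapply Rle_lt_trans; [apply HK; lra|].
  assert (eps / (2 * (X + 1)) * X < eps / 2).
  { apply Rmult_lt_reg_r with (2 * (X + 1)); [lra|].
    replace (eps / (2 * (X + 1)) * X * (2 * (X + 1))) with (eps * X) by (field; lra). nra. }
  assert (K / eta < eps / 2).
  { apply Rle_lt_trans with (Rabs K / eta).
    { apply Rmult_le_compat_r; [left; apply Rinv_0_lt_compat; lra | apply Rle_abs]. }
    apply Rmult_lt_reg_r with (2 * eta / eps); [apply Rdiv_lt_0_compat; lra|].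
    replace (Rabs K / eta * (2 * eta / eps)) with (2 * Rabs K / eps) by (field; lra).
    replace (eps / 2 * (2 * eta / eps)) with eta by (field; lra). lra. }
  lra.
Qed.

Theorem mainTheorem6 (alpha beta : R) (Phi Phi1 Phi2 : R -> R) (x : R) :
  -1 < alpha -> 0 < beta ->
  deriv_on_nonneg Phi Phi1 -> deriv_on_nonneg Phi1 Phi2 ->
  cont_on_nonneg Phi -> cont_on_nonneg Phi1 -> cont_on_nonneg Phi2 ->
  bounded_on_nonneg Phi -> bounded_on_nonneg Phi1 -> bounded_on_nonneg Phi2 ->
  0 <= x ->
  is_lim (fun eta => eta * (R_op alpha beta eta Phi x - Phi x)) p_infty
    ((1 + alpha) * Phi1 x + x * (3 * beta + 1) / (2 * beta) * Phi2 x).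
Proof.
  intros Halpha Hbeta Hd1 Hd2 Hc0 Hc1 Hc2 Hb0 _ Hb2 Hx.
  apply (is_lim_p_infty_of_bound _ _ (x * (1 + 3 * beta) / beta + Rabs (bias_coef alpha beta) / beta ^ 2)).
  { apply Rplus_le_le_0_compat; apply Rdiv_le_0_compat; try apply Rabs_pos; nra. }
  intros eps Heps.
  destruct (taylor2_rem_bound Phi Phi1 Phi2 x Hd1 Hd2 Hc0 Hc1 Hc2 Hb2 Hx eps Heps) as [C [HC0 HC]].
  eexists. intros eta Heta.
  apply (R_op_error_le alpha beta Phi Phi1 Phi2 x eta Halpha Hbeta Hc0 Hb0 Hx ltac:(lra) eps C HC);
    lra.
Qed.
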